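(* Let $X$ be a Hilbert space and let $T:X\rightrightarrows X$ be a proper set-valued mapping whose graph $\operatorname{gph}T$ is closed in the norm topology of $X\times X$. Then the following are equivalent: (i) $T$ is maximal monotone on $X$; (ii) $T$ is hypomonotone on $X$ and for every $(u,v)\in\operatorname{gph}T$ one has $\langle z,w\rangle\ge 0$ whenever $w\in X$ and $z\in\widehat D^*T(u,v)(w)$.
   Context: $X$ is a real Hilbert space identified with its dual, with inner product $\langle\cdot,\cdot\rangle$ and norm $\|\cdot\|$. A set-valued mapping $T:X\rightrightarrows X$ has domain $\operatorname{dom}T=\{u: T(u)\neq\emptyset\}$ and graph $\operatorname{gph}T=\{(u,v): v\in T(u)\}$; $T$ is proper if $\operatorname{dom}T\neq\emptyset$. $T$ is monotone if $\langle v_1-v_2,u_1-u_2\rangle\ge0$ for all $(u_1,v_1),(u_2,v_2)\in\operatorname{gph}T$; maximal monotone if it is monotone and $\operatorname{gph}T=\operatorname{gph}S$ for every monotone $S$ with $\operatorname{gph}T\subset\operatorname{gph}S$. $T$ is hypomonotone on $X$ if there is $r>0$ with $\langle v_1-v_2,u_1-u_2\rangle\ge -r\|u_1-u_2\|^2$ for all $(u_1,v_1),(u_2,v_2)\in\operatorname{gph}T$. For a set $\Omega\subset X\times X$ and $\bar p\in\Omega$, the regular (Fréchet) normal cone is $\widehat N(\bar p;\Omega)=\{q: \limsup_{p\to\bar p,\,p\in\Omega}\frac{\langle q,p-\bar p\rangle}{\|p-\bar p\|}\le 0\}$. The regular coderivative of $T$ at $(u,v)\in\operatorname{gph}T$ is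 $\widehat D^*T(u,v)(w)=\{z\in X: (z,-w)\in\widehat N((u,v);\operatorname{gph}T)\}$ for $w\in X$. *)

From Stdlib Require Import Reals.
Open Scope R_scope.

Record HilbertSpace := {
  hcar :> Type;
  hzero : hcar;
  hadd : hcar -> hcar -> hcar;
  hopp : hcar -> hcar;
  hscal : R -> hcar -> hcar;
  hinner : hcar -> hcar -> R;
  haddA : forall x y z, hadd x (hadd y z) = hadd (hadd x y) z;
  haddC : forall x y, hadd x y = hadd y x;
  hadd0 : forall x, hadd x hzero = x;
  haddN : forall x, hadd x (hopp x) = hzero;
  hscal1 : forall x, hscal 1 x = x;
  hscalA : forall a b x, hscal a (hscal b x) = hscal (a * b) x;
  hscalDr : forall a x y, hscal a (hadd x y) = hadd (hscal a x) (hscal a y);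
  hscalDl : forall a b x, hscal (a + b) x = hadd (hscal a x) (hscal b x);
  hinner_sym : forall x y, hinner x y = hinner y x;
  hinner_addl : forall x y z, hinner (hadd x y) z = hinner x z + hinner y z;
  hinner_scall : forall a x y, hinner (hscal a x) y = a * hinner x y;
  hinner_pos : forall x, 0 <= hinner x x;
  hinner_def : forall x, hinner x x = 0 -> x = hzero;
  hcomplete : forall s : nat -> hcar,
    (forall eps, eps > 0 -> exists N, forall m n, (m >= N)%nat -> (n >= N)%nat ->
        sqrt (hinner (hadd (s m) (hopp (s n))) (hadd (s m) (hopp (s n)))) < eps) ->
    exists l, forall eps, eps > 0 -> exists N, forall n, (n >= N)%nat ->
        sqrt (hinner (hadd (s n) (hopp l)) (hadd (s n) (hopp l))) < eps
}.

Section Defs.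
Context {X : HilbertSpace}.

Definition hsub (x y : X) : X := hadd X x (hopp X y).
Definition hnorm (x : X) : R := sqrt (hinner X x x).

(* set-valued map T : X ⇉ X, encoded by its graph: T u v  <->  v ∈ T(u) *)
Definition setmap := X -> X -> Prop.

Definition dom (T : setmap) (u : X) : Prop := exists v, T u v.
Definition proper (T : setmap) : Prop := exists u, dom T u.

Definition pinner (p q : X * X) : R :=
  hinner X (fst p) (fst q) + hinner X (snd p) (snd q).
Definition psub (p q : X * X) : X * X := (hsub (fst p) (fst q), hsub (snd p) (snd q)).
Definition pnorm (p : X * X) : R := sqrt (pinner p p).

Definition closed_pset (Om : X * X -> Prop) : Prop :=
  forall p, ~ Om p -> exists eps, eps > 0 /\
    forall q, pnorm (psub q p) < eps -> ~ Om q.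

Definition gph (T : setmap) : X * X -> Prop := fun p => T (fst p) (snd p).

Definition monotone (T : setmap) : Prop :=
  forall u1 v1 u2 v2, T u1 v1 -> T u2 v2 ->
    0 <= hinner X (hsub v1 v2) (hsub u1 u2).

Definition maximal_monotone (T : setmap) : Prop :=
  monotone T /\
  forall S : setmap, monotone S -> (forall u v, T u v -> S u v) ->
    forall u v, S u v <-> T u v.

Definition hypomonotone (T : setmap) : Prop :=
  exists r, r > 0 /\ forall u1 v1 u2 v2, T u1 v1 -> T u2 v2 ->
    hinner X (hsub v1 v2) (hsub u1 u2) >= - r * (hnorm (hsub u1 u2))^2.

(* Regular (Fréchet) normal cone: q ∈ N̂(pbar; Om) iff
   limsup_{p -> pbar, p ∈ Om} <q, p - pbar>/||p - pbar|| <= 0,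
   written out with epsilon-delta (points p = pbar are excluded). *)
Definition regular_normal (Om : X * X -> Prop) (pbar q : X * X) : Prop :=
  forall eps, eps > 0 -> exists delta, delta > 0 /\
    forall p, Om p -> 0 < pnorm (psub p pbar) < delta ->
      pinner q (psub p pbar) / pnorm (psub p pbar) <= eps.

(* Regular coderivative: z ∈ D̂*T(u,v)(w) iff (z,-w) ∈ N̂((u,v); gph T). *)
Definition reg_coderiv (T : setmap) (u v w z : X) : Prop :=
  regular_normal (gph T) (u, v) (z, hopp X w).

End Defs.

(* (i) -> (ii): a monotone map is hypomonotone.  If <z, w> < 0 for some
   z in D^*T(u,v)(w), Minty's theorem (I + T is onto) yields graph points
   (u, v) + (A, B) with A + B = t (z - w); monotonicity makes them O(t)-close
   to (u, v) while <(z, -w), (A, B)> >= t |<z, w>|, so (z, -w) is not a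
   regular normal.  Minty's theorem is obtained by minimizing the Fitzpatrick
   function plus half the squared norm.

   (ii) -> (i): in the coordinates x = u + lam v, y = u - lam v with
   lam = 1/(4r), hypomonotonicity makes y a 2-Lipschitz function of x along
   gph T, and a pair violating monotonicity is one where y moves further than
   x.  The Borwein-Preiss variational principle applied to a penalized
   "move y along the violation while keeping x on the segment" objective on
   gph T x [0, 1] produces a point where the coderivative condition and the
   first order condition in the segment parameter contradict each other.  So
   T is monotone; the same principle applied to |u + v - w|^2 shows that
   I + T is onto, and a monotone map with I + T onto is maximal. *)

From Stdlib Require Import Reals Lra Psatz ClassicalEpsilon Classical.
Open Scope R_scope.

Section HilbertAlgebra.
Variable H : HilbertSpace.
Implicit Types x y z : H.

Lemma hinner_addr x y z : hinner H x (hadd H y z) = hinner H x y + hinner H x z.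
Proof. rewrite !(hinner_sym H x), hinner_addl; reflexivity. Qed.

Lemma hinner_scalr a x y : hinner H x (hscal H a y) = a * hinner H x y.
Proof. rewrite !(hinner_sym H x), hinner_scall; reflexivity. Qed.

Lemma hinner_0l y : hinner H (hzero H) y = 0.
Proof.
  pose proof (f_equal (fun u => hinner H u y) (hadd0 H (hzero H))) as E.
  simpl in E; rewrite hinner_addl in E; lra.
Qed.

Lemma hinner_0r y : hinner H y (hzero H) = 0.
Proof. rewrite hinner_sym; apply hinner_0l. Qed.

Lemma hinner_oppl x y : hinner H (hopp H x) y = - hinner H x y.
Proof.
  pose proof (f_equal (fun u => hinner H u y) (haddN H x)) as E.
  simpl in E; rewrite hinner_addl, hinner_0l in E; lra.
Qed.

Lemma hinner_oppr x y : hinner H x (hopp H y) = - hinner H x y.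
Proof. rewrite !(hinner_sym H x); apply hinner_oppl. Qed.

Lemma hinner_subl x y z : hinner H (hsub x y) z = hinner H x z - hinner H y z.
Proof. unfold hsub; rewrite hinner_addl, hinner_oppl; ring. Qed.

Lemma hinner_subr x y z : hinner H x (hsub y z) = hinner H x y - hinner H x z.
Proof. unfold hsub; rewrite hinner_addr, hinner_oppr; ring. Qed.

Lemma hsub_eq0 x y : hsub x y = hzero H -> x = y.
Proof.
  unfold hsub; intro E.
  rewrite <- (hadd0 H x), <- (haddN H y), haddA, (haddC H x y), <- haddA, E, hadd0.
  reflexivity.
Qed.

Lemma hinner_inj x y : (forall w, hinner H x w = hinner H y w) -> x = y.
Proof.
  intro Hw; apply hsub_eq0, hinner_def.
  rewrite hinner_subl, !Hw; ring.
Qed.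

Lemma hinner_add_sq x y :
  hinner H (hadd H x y) (hadd H x y) = hinner H x x + 2 * hinner H x y + hinner H y y.
Proof. rewrite !hinner_addl, !hinner_addr, (hinner_sym H y x); ring. Qed.

Lemma hinner_sub_sq x y :
  hinner H (hsub x y) (hsub x y) = hinner H x x - 2 * hinner H x y + hinner H y y.
Proof. rewrite !hinner_subl, !hinner_subr, (hinner_sym H y x); ring. Qed.

End HilbertAlgebra.

Arguments hinner_inj {H} x y.

(* Vector identities are proved by testing both sides against an arbitrary
   vector, which turns them into identities of real numbers. *)
Ltac hinner_simpl :=
  repeat first [ rewrite hinner_addl | rewrite hinner_subl | rewrite hinner_scall
               | rewrite hinner_oppl | rewrite hinner_0l ].
Ltac hvec := apply hinner_inj; intro; hinner_simpl; ring.

Lemma sqrt_le_square a b : 0 <= b -> a <= b * b -> sqrt a <= b.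
Proof. intros Hb Hab; rewrite <- (sqrt_square b) by lra; apply sqrt_le_1_alt; lra. Qed.

Section HilbertNorm.
Variable H : HilbertSpace.
Implicit Types x y z : H.

Lemma hnorm_ge0 x : 0 <= hnorm x.
Proof. apply sqrt_pos. Qed.

Lemma hnorm_sq x : hnorm x * hnorm x = hinner H x x.
Proof. apply sqrt_sqrt, hinner_pos. Qed.

Lemma hnorm_le x b : 0 <= b -> hinner H x x <= b * b -> hnorm x <= b.
Proof. apply sqrt_le_square. Qed.

Lemma hinner_sq_le_unit x : hinner H x x <= 1 -> hnorm x <= 1.
Proof. intro Hx; apply hnorm_le; lra. Qed.

Lemma cauchy_schwarz_sq x y :
  hinner H x y * hinner H x y <= hinner H x x * hinner H y y.
Proof.
  destruct (Req_dec (hinner H y y) 0) as [E|E].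
  - apply hinner_def in E; subst y; rewrite !hinner_0r; lra.
  - set (a := hinner H y y); set (c := hinner H x y).
    assert (Ha : a > 0) by (pose proof (hinner_pos H y); unfold a; lra).
    pose proof (hinner_pos H (hsub x (hscal H (c / a) y))) as K.
    rewrite hinner_sub_sq, hinner_scall, !hinner_scalr in K; fold a c in K.
    replace (hinner H x x - 2 * (c / a * c) + c / a * (c / a * a))
      with ((hinner H x x * a - c * c) / a) in K by (field; lra).
    enough (0 <= hinner H x x * a - c * c) by lra.
    replace (hinner H x x * a - c * c) with ((hinner H x x * a - c * c) / a * a) by (field; lra).
    apply Rmult_le_pos; lra.
Qed.

Lemma cauchy_schwarz x y : Rabs (hinner H x y) <= hnorm x * hnorm y.
Proof.
  unfold hnorm; rewrite <- sqrt_mult by apply hinner_pos.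
  rewrite <- sqrt_Rsqr_abs; apply sqrt_le_1_alt; apply cauchy_schwarz_sq.
Qed.

Lemma hinner_le_norm x y : hinner H x y <= hnorm x * hnorm y.
Proof. eapply Rle_trans; [apply Rle_abs|apply cauchy_schwarz]. Qed.

Lemma hinner_ge_norm x y : - (hnorm x * hnorm y) <= hinner H x y.
Proof.
  pose proof (cauchy_schwarz x y); pose proof (Rle_abs (- hinner H x y)) as L.
  rewrite Rabs_Ropp in L; lra.
Qed.

Lemma hnorm_triangle x y : hnorm (hadd H x y) <= hnorm x + hnorm y.
Proof.
  apply hnorm_le; [pose proof (hnorm_ge0 x); pose proof (hnorm_ge0 y); lra|].
  rewrite hinner_add_sq, <- (hnorm_sq x), <- (hnorm_sq y).
  pose proof (hinner_le_norm x y); nra.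
Qed.

Lemma hnorm_scal a x : hnorm (hscal H a x) = Rabs a * hnorm x.
Proof.
  unfold hnorm; rewrite hinner_scall, hinner_scalr, <- Rmult_assoc.
  rewrite sqrt_mult by (try apply hinner_pos; nra).
  rewrite <- sqrt_Rsqr_abs; reflexivity.
Qed.

Lemma hnorm_scal_ge0 a x : 0 <= a -> hnorm (hscal H a x) = a * hnorm x.
Proof. intro Ha; rewrite hnorm_scal, Rabs_right; lra. Qed.

Lemma hnorm_opp x : hnorm (hopp H x) = hnorm x.
Proof. unfold hnorm; rewrite hinner_oppl, hinner_oppr, Ropp_involutive; reflexivity. Qed.

Lemma hnorm_subC x y : hnorm (hsub x y) = hnorm (hsub y x).
Proof. unfold hnorm; rewrite !hinner_sub_sq, (hinner_sym H y x); f_equal; ring. Qed.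

Lemma hnorm_sub_le x y : hnorm (hsub x y) <= hnorm x + hnorm y.
Proof. unfold hsub; rewrite <- (hnorm_opp y); apply hnorm_triangle. Qed.

Lemma hnorm_sub_triangle x y z : hnorm (hsub x z) <= hnorm (hsub x y) + hnorm (hsub y z).
Proof.
  replace (hsub x z) with (hadd H (hsub x y) (hsub y z)) by hvec.
  apply hnorm_triangle.
Qed.

Lemma hnorm_subxx x : hnorm (hsub x x) = 0.
Proof. unfold hnorm; rewrite hinner_sub_sq, <- sqrt_0; f_equal; ring. Qed.

Lemma hnorm_sub_eq0 x y : hnorm (hsub x y) = 0 -> x = y.
Proof. intro E; apply hsub_eq0, hinner_def; rewrite <- hnorm_sq, E; ring. Qed.

End HilbertNorm.

Lemma pow_le1 x n : 0 <= x <= 1 -> x ^ n <= 1.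
Proof.
  intros Hx; induction n as [|n IH]; simpl; [lra|].
  pose proof (pow_le x n (proj1 Hx)); nra.
Qed.

Lemma half_pow_pos k : 0 < (/2) ^ k.
Proof. apply pow_lt; lra. Qed.

Lemma pow_cv0 x : 0 <= x < 1 -> Un_cv (fun k => x ^ k) 0.
Proof.
  intros Hx eps He; destruct (pow_lt_1_zero x) with (y := eps) as [N HN];
    [rewrite Rabs_right; lra | lra |].
  exists N; intros n Hn; unfold Rdist; rewrite Rminus_0_r; apply HN; auto.
Qed.

Lemma half_pow_lt eps : eps > 0 -> exists N, forall n, (n >= N)%nat -> (/2) ^ n < eps.
Proof.
  intro He; destruct (pow_cv0 (/2) ltac:(lra) eps He) as [N HN].
  exists N; intros n Hn; specialize (HN n Hn); unfold Rdist in HN.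
  rewrite Rminus_0_r, Rabs_right in HN by (apply Rle_ge, pow_le; lra); exact HN.
Qed.

Lemma cv_const c : Un_cv (fun _ => c) c.
Proof. intros eps He; exists 0%nat; intros; unfold Rdist; rewrite Rminus_diag, Rabs_R0; lra. Qed.

Lemma cv_shift u l : Un_cv u l -> Un_cv (fun n => u (S n)) l.
Proof. intros Hc eps He; destruct (Hc eps He) as [N HN]; exists N; intros n Hn; apply HN; lia. Qed.

Section Convergence.
Variable H : HilbertSpace.

Definition conv (s : nat -> H) (l : H) :=
  forall eps, eps > 0 -> exists N, forall n, (n >= N)%nat -> hnorm (hsub (s n) l) < eps.

Definition seqclosed (S : H -> Prop) :=
  forall s l, (forall n, S (s n)) -> conv s l -> S l.

Lemma conv_const l : conv (fun _ => l) l.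
Proof. intros eps He; exists 0%nat; intros; rewrite hnorm_subxx; lra. Qed.

Lemma conv_shift s l : conv s l -> conv (fun n => s (S n)) l.
Proof. intros Hc eps He; destruct (Hc eps He) as [N HN]; exists N; intros n Hn; apply HN; lia. Qed.

Lemma conv_sub s t l m : conv s l -> conv t m -> conv (fun n => hsub (s n) (t n)) (hsub l m).
Proof.
  intros H1 H2 eps He.
  destruct (H1 (eps / 2)) as [N1 K1]; [lra|]; destruct (H2 (eps / 2)) as [N2 K2]; [lra|].
  exists (max N1 N2); intros n Hn.
  replace (hsub (hsub (s n) (t n)) (hsub l m)) with (hsub (hsub (s n) l) (hsub (t n) m)) by hvec.
  eapply Rle_lt_trans; [apply hnorm_sub_le|].
  specialize (K1 n ltac:(lia)); specialize (K2 n ltac:(lia)); lra.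
Qed.

Lemma conv_le_bound s l a B :
  conv s l -> (forall n, hnorm (hsub (s n) a) <= B) -> hnorm (hsub l a) <= B.
Proof.
  intros Hc Hb; apply Rnot_lt_le; intro Hlt.
  destruct (Hc (hnorm (hsub l a) - B)) as [N HN]; [lra|].
  specialize (HN N (le_n _)); specialize (Hb N).
  pose proof (hnorm_sub_triangle H l (s N) a); rewrite hnorm_subC in HN; lra.
Qed.

Lemma conv_unique s l l' : conv s l -> conv s l' -> l = l'.
Proof.
  intros Hl Hl'; apply hnorm_sub_eq0, Rle_antisym; [|apply hnorm_ge0].
  apply Rnot_lt_le; intro Hpos.
  destruct (Hl (hnorm (hsub l l') / 2)) as [N1 K1]; [lra|].
  destruct (Hl' (hnorm (hsub l l') / 2)) as [N2 K2]; [lra|].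
  specialize (K1 (max N1 N2) ltac:(lia)); specialize (K2 (max N1 N2) ltac:(lia)).
  pose proof (hnorm_sub_triangle H l (s (max N1 N2)) l'); rewrite hnorm_subC in K1; lra.
Qed.

Section GeometricSteps.
Variable s : nat -> H.
Variable C : R.
Hypothesis C_ge0 : 0 <= C.
Hypothesis steps : forall k, hnorm (hsub (s (S k)) (s k)) <= C * (/2) ^ k.

Lemma geometric_dist_le n m : (n <= m)%nat -> hnorm (hsub (s m) (s n)) <= 2 * C * (/2) ^ n.
Proof.
  assert (Hnm : forall j,
    hnorm (hsub (s (n + j)%nat) (s n)) <= 2 * C * (/2) ^ n - 2 * C * (/2) ^ (n + j)).
  { induction j as [|j IH].
    - rewrite Nat.add_0_r, hnorm_subxx; lra.
    - eapply Rle_trans; [apply (hnorm_sub_triangle H _ (s (n + j)%nat))|].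
      replace (n + S j)%nat with (S (n + j)) by lia.
      pose proof (steps (n + j)%nat); simpl pow; lra. }
  intro Hle; replace m with (n + (m - n))%nat by lia.
  eapply Rle_trans; [apply Hnm|].
  pose proof (half_pow_pos (n + (m - n))); nra.
Qed.

Lemma geometric_conv : exists l, conv s l /\ forall k, hnorm (hsub (s k) l) <= 2 * C * (/2) ^ k.
Proof.
  destruct (hcomplete H s) as [l Hl].
  - intros eps He; destruct (half_pow_lt (eps / (2 * C + 1))) as [N HN].
    { apply Rdiv_lt_0_compat; lra. }
    exists N; intros m n Hm Hn.
    assert (HNp : forall j, (j >= N)%nat -> 2 * C * (/2) ^ j < eps).
    { intros j Hj; specialize (HN j Hj); pose proof (half_pow_pos j).
      apply Rmult_lt_compat_l with (r := 2 * C + 1) in HN; [|lra].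
      replace ((2 * C + 1) * (eps / (2 * C + 1))) with eps in HN by (field; lra); nra. }
    change (hnorm (hsub (s m) (s n)) < eps).
    destruct (Nat.le_ge_cases n m); [|rewrite hnorm_subC];
      (eapply Rle_lt_trans; [apply geometric_dist_le; eassumption|apply HNp; assumption]).
  - exists l; split.
    + intros eps He; destruct (Hl eps He) as [N HN]; exists N; intros n Hn; apply HN; auto.
    + intro k; apply Rnot_lt_le; intro Hlt.
      destruct (Hl (hnorm (hsub (s k) l) - 2 * C * (/2) ^ k)) as [N HN]; [lra|].
      specialize (HN (max N k) (Nat.le_max_l _ _)).
      pose proof (hnorm_sub_triangle H (s k) (s (max N k)) l).
      pose proof (geometric_dist_le k (max N k) (Nat.le_max_r _ _)) as B.
      rewrite hnorm_subC in B.
      change (hnorm (hsub (s (max N k)) l) < hnorm (hsub (s k) l) - 2 * C * (/2) ^ k) in HN.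
      lra.
Qed.

End GeometricSteps.

Lemma conv_hinner s l w :
  conv s l -> Un_cv (fun n => hinner H (s n) w) (hinner H l w).
Proof.
  intros Hc eps He.
  pose proof (hnorm_ge0 H w).
  destruct (Hc (eps / (hnorm w + 1))) as [N HN]; [apply Rdiv_lt_0_compat; lra|].
  exists N; intros n Hn; unfold Rdist.
  rewrite <- hinner_subl; eapply Rle_lt_trans; [apply cauchy_schwarz|].
  specialize (HN n Hn); pose proof (hnorm_ge0 H (hsub (s n) l)).
  apply Rmult_lt_compat_r with (r := hnorm w + 1) in HN; [|lra].
  replace (eps / (hnorm w + 1) * (hnorm w + 1)) with eps in HN by (field; lra); nra.
Qed.

Lemma conv_hinner_r s l w :
  conv s l -> Un_cv (fun n => hinner H w (s n)) (hinner H w l).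
Proof.
  intros Hc eps He; destruct (conv_hinner s l w Hc eps He) as [N HN].
  exists N; intros n Hn; rewrite !(hinner_sym H w); apply HN, Hn.
Qed.

Lemma conv_hinner_sq s l :
  conv s l -> Un_cv (fun n => hinner H (s n) (s n)) (hinner H l l).
Proof.
  intros Hc.
  assert (Hd : Un_cv (fun n => hnorm (hsub (s n) l)) 0).
  { intros e He; destruct (Hc e He) as [N HN]; exists N; intros n Hn; unfold Rdist.
    rewrite Rminus_0_r, Rabs_right by (apply Rle_ge, hnorm_ge0); auto. }
  assert (E : forall n, hinner H (s n) (s n) =
     2 * hinner H (s n) l - hinner H l l + hnorm (hsub (s n) l) * hnorm (hsub (s n) l)).
  { intro n; rewrite hnorm_sq, hinner_sub_sq; ring. }
  replace (hinner H l l) with (2 * hinner H l l - hinner H l l + 0 * 0) by ring.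
  intros eps He.
  destruct (CV_plus _ _ _ _ (CV_minus _ _ _ _ (CV_mult _ _ _ _ (cv_const 2) (conv_hinner s l l Hc))
    (cv_const (hinner H l l))) (CV_mult _ _ _ _ Hd Hd) eps He) as [N HN].
  exists N; intros n Hn; rewrite E; apply HN; exact Hn.
Qed.

End Convergence.

Arguments conv {H} s l.
Arguments seqclosed {H} S.

Lemma conv_lipschitz {H1 H2 : HilbertSpace} (A : H1 -> H2) K (s : nat -> H1) l :
  0 <= K -> (forall n, hnorm (hsub (A (s n)) (A l)) <= K * hnorm (hsub (s n) l)) ->
  conv s l -> conv (fun n => A (s n)) (A l).
Proof.
  intros HK HA Hc eps He.
  destruct (Hc (eps / (K + 1))) as [N HN]; [apply Rdiv_lt_0_compat; lra|].
  exists N; intros n Hn; eapply Rle_lt_trans; [apply HA|].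
  specialize (HN n Hn); pose proof (hnorm_ge0 H1 (hsub (s n) l)).
  apply Rmult_lt_compat_r with (r := K + 1) in HN; [|lra].
  replace (eps / (K + 1) * (K + 1)) with eps in HN by (field; lra); nra.
Qed.

Lemma sqrt_plus_le a b : 0 <= a -> 0 <= b -> sqrt (a + b) <= sqrt a + sqrt b.
Proof.
  intros Ha Hb; pose proof (sqrt_pos a); pose proof (sqrt_pos b).
  apply sqrt_le_square; [lra|].
  pose proof (sqrt_sqrt a Ha); pose proof (sqrt_sqrt b Hb); nra.
Qed.

Definition prodH (A B : HilbertSpace) : HilbertSpace.
Proof.
  refine {| hcar := (hcar A * hcar B)%type;
            hzero := (hzero A, hzero B);
            hadd := fun p q => (hadd A (fst p) (fst q), hadd B (snd p) (snd q));
            hopp := fun p => (hopp A (fst p), hopp B (snd p));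
            hscal := fun a p => (hscal A a (fst p), hscal B a (snd p));
            hinner := fun p q => hinner A (fst p) (fst q) + hinner B (snd p) (snd q) |}.
  - intros [] [] []; simpl; f_equal; apply haddA.
  - intros [] []; simpl; f_equal; apply haddC.
  - intros []; simpl; f_equal; apply hadd0.
  - intros []; simpl; f_equal; apply haddN.
  - intros []; simpl; f_equal; apply hscal1.
  - intros a b []; simpl; f_equal; apply hscalA.
  - intros a [] []; simpl; f_equal; apply hscalDr.
  - intros a b []; simpl; f_equal; apply hscalDl.
  - intros [] []; simpl; f_equal; apply hinner_sym.
  - intros [] [] []; simpl; rewrite !hinner_addl; ring.
  - intros a [] []; simpl; rewrite !hinner_scall; ring.
  - intros [a b]; simpl; pose proof (hinner_pos A a); pose proof (hinner_pos B b); lra.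
  - intros [a b]; simpl; intro E; pose proof (hinner_pos A a); pose proof (hinner_pos B b).
    f_equal; apply hinner_def; lra.
  - intros s Hs.
    destruct (hcomplete A (fun n => fst (s n))) as [la Hla].
    { intros eps He; destruct (Hs eps He) as [N HN]; exists N; intros m n Hm Hn.
      eapply Rle_lt_trans; [|exact (HN m n Hm Hn)]; apply sqrt_le_1_alt; simpl.
      pose proof (hinner_pos B (hadd B (snd (s m)) (hopp B (snd (s n))))); lra. }
    destruct (hcomplete B (fun n => snd (s n))) as [lb Hlb].
    { intros eps He; destruct (Hs eps He) as [N HN]; exists N; intros m n Hm Hn.
      eapply Rle_lt_trans; [|exact (HN m n Hm Hn)]; apply sqrt_le_1_alt; simpl.
      pose proof (hinner_pos A (hadd A (fst (s m)) (hopp A (fst (s n))))); lra. }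
    exists (la, lb); intros eps He.
    destruct (Hla (eps / 2)) as [N1 H1]; [lra|]; destruct (Hlb (eps / 2)) as [N2 H2]; [lra|].
    exists (max N1 N2); intros n Hn; simpl.
    eapply Rle_lt_trans; [apply sqrt_plus_le; apply hinner_pos|].
    specialize (H1 n ltac:(lia)); specialize (H2 n ltac:(lia)); simpl in H1, H2; lra.
Defined.

Definition Rspace : HilbertSpace.
Proof.
  refine {| hcar := R; hzero := 0; hadd := Rplus; hopp := Ropp; hscal := Rmult;
            hinner := Rmult |}; intros; try ring; try nra.
  destruct (R_complete s) as [l Hl].
  - intros eps He; destruct (H eps He) as [N HN]; exists N; intros n m Hn Hm.
    specialize (HN n m Hn Hm); unfold Rdist; rewrite <- sqrt_Rsqr_abs; exact HN.
  - exists l; intros eps He; destruct (Hl eps He) as [N HN]; exists N; intros n Hn.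
    specialize (HN n Hn); unfold Rdist in HN; rewrite <- sqrt_Rsqr_abs in HN; exact HN.
Defined.

Lemma hnorm_Rspace (x y : Rspace) : hnorm (hsub x y) = Rabs (x - y).
Proof. unfold hnorm; simpl; rewrite <- sqrt_Rsqr_abs; reflexivity. Qed.

Section ProductSpace.
Variables A B : HilbertSpace.
Implicit Types p q : prodH A B.

Lemma hnorm_sub_fst p q : hnorm (hsub (fst p) (fst q)) <= hnorm (hsub p q).
Proof.
  unfold hnorm, hsub; simpl; apply sqrt_le_1_alt.
  pose proof (hinner_pos B (hadd B (snd p) (hopp B (snd q)))); lra.
Qed.

Lemma hnorm_sub_snd p q : hnorm (hsub (snd p) (snd q)) <= hnorm (hsub p q).
Proof.
  unfold hnorm, hsub; simpl; apply sqrt_le_1_alt.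
  pose proof (hinner_pos A (hadd A (fst p) (hopp A (fst q)))); lra.
Qed.

Lemma hnorm_sub_pair p q :
  hnorm (hsub p q) <= hnorm (hsub (fst p) (fst q)) + hnorm (hsub (snd p) (snd q)).
Proof. unfold hnorm, hsub; simpl; apply sqrt_plus_le; apply hinner_pos. Qed.

Lemma conv_fst (s : nat -> prodH A B) l : conv s l -> conv (fun n => fst (s n)) (fst l).
Proof.
  intros Hc eps He; destruct (Hc eps He) as [N HN]; exists N; intros n Hn.
  eapply Rle_lt_trans; [apply hnorm_sub_fst|apply HN; auto].
Qed.

Lemma conv_snd (s : nat -> prodH A B) l : conv s l -> conv (fun n => snd (s n)) (snd l).
Proof.
  intros Hc eps He; destruct (Hc eps He) as [N HN]; exists N; intros n Hn.
  eapply Rle_lt_trans; [apply hnorm_sub_snd|apply HN; auto].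
Qed.

Lemma conv_pair (s : nat -> prodH A B) (l : prodH A B) :
  conv (fun n => fst (s n)) (fst l) -> conv (fun n => snd (s n)) (snd l) -> conv s l.
Proof.
  intros H1 H2 eps He.
  destruct (H1 (eps / 2)) as [N1 K1]; [lra|]; destruct (H2 (eps / 2)) as [N2 K2]; [lra|].
  exists (max N1 N2); intros n Hn; eapply Rle_lt_trans; [apply hnorm_sub_pair|].
  specialize (K1 n ltac:(lia)); specialize (K2 n ltac:(lia)); lra.
Qed.

End ProductSpace.

Lemma conv_fst_add_snd (X : HilbertSpace) (s : nat -> prodH X X) (l : prodH X X) :
  conv s l -> conv (fun n => hadd X (fst (s n)) (snd (s n))) (hadd X (fst l) (snd l)).
Proof.
  apply (conv_lipschitz (fun q : prodH X X => hadd X (fst q) (snd q)) 2); [lra|].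
  intro n; replace (hsub (hadd X (fst (s n)) (snd (s n))) (hadd X (fst l) (snd l)))
    with (hadd X (hsub (fst (s n)) (fst l)) (hsub (snd (s n)) (snd l))) by hvec.
  eapply Rle_trans; [apply hnorm_triangle|].
  pose proof (hnorm_sub_fst X X (s n) l); pose proof (hnorm_sub_snd X X (s n) l); lra.
Qed.

Lemma conv_Rspace (s : nat -> Rspace) l : conv s l -> Un_cv s l.
Proof.
  intros Hc eps He; destruct (Hc eps He) as [N HN]; exists N; intros n Hn.
  specialize (HN n Hn); rewrite hnorm_Rspace in HN; exact HN.
Qed.

Lemma seqclosed_unit_interval : @seqclosed Rspace (fun t => 0 <= t <= 1).
Proof.
  intros s l Hs Hc; apply conv_Rspace in Hc; split.
  - apply (@Rle_cv_lim (fun _ => 0) s); [apply Hs|apply cv_const|exact Hc].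
  - apply (@Rle_cv_lim s (fun _ => 1)); [apply Hs|exact Hc|apply cv_const].
Qed.

Lemma seqclosed_gph (X : HilbertSpace) (T : X -> X -> Prop) :
  closed_pset (gph T) -> @seqclosed (prodH X X) (gph T).
Proof.
  intros Hcl s l Hs Hc; apply NNPP; intro Hn.
  destruct (Hcl l Hn) as [eps [He Hb]]; destruct (Hc eps He) as [N HN].
  exact (Hb (s N) (HN N (le_n _)) (Hs N)).
Qed.

Lemma recenter_sq_dist (H : HilbertSpace) (a m : R) (c w z z' : H) : a + m <> 0 ->
  let c' := hadd H c (hscal H (m / (a + m)) (hsub w c)) in
  (a + m) * hinner H (hsub z c') (hsub z c') - (a + m) * hinner H (hsub z' c') (hsub z' c')
  = a * hinner H (hsub z c) (hsub z c) + m * hinner H (hsub z w) (hsub z w)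
    - a * hinner H (hsub z' c) (hsub z' c) - m * hinner H (hsub z' w) (hsub z' w).
Proof.
  intros Ha c'; unfold c'.
  rewrite !hinner_subl, !hinner_subr, !hinner_addl, !hinner_addr, !hinner_scall,
    !hinner_scalr, !hinner_subl, !hinner_subr.
  rewrite (hinner_sym H c z), (hinner_sym H w z), (hinner_sym H c z'), (hinner_sym H w z'),
    (hinner_sym H w c).
  field; exact Ha.
Qed.

Section SmoothVariational.
Variable H : HilbertSpace.
Variable Om : H -> Prop.
Variable f : H -> R.
Hypothesis Om_closed : seqclosed Om.
Hypothesis Om_nonempty : exists z, Om z.
Hypothesis f_bounded_below : exists m, forall z, Om z -> m <= f z.
Hypothesis f_cont : forall s l, (forall n, Om (s n)) -> Om l -> conv s l ->
  Un_cv (fun n => f (s n)) (f l).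

Local Notation nsq x := (hinner H x x).

(* The implication inside the existential lets the choice be made
   without the hypotheses on [a] and [d]. *)
Lemma approx_argmin_exists c a d : exists z, 0 <= a -> d > 0 -> Om z /\
  forall z', Om z' -> f z + a * nsq (hsub z c) <= f z' + a * nsq (hsub z' c) + d.
Proof.
  destruct (classic (0 <= a /\ d > 0)) as [[Ha Hd]|Hn].
  2:{ destruct Om_nonempty as [z0 _]; exists z0; tauto. }
  destruct f_bounded_below as [m Hm].
  set (E := fun y => exists z, Om z /\ y = - (f z + a * nsq (hsub z c))).
  assert (Hb : bound E).
  { exists (- m); intros y [z [Hz ->]]; specialize (Hm z Hz).
    pose proof (hinner_pos H (hsub z c)); nra. }
  assert (Hex : exists x, E x).
  { destruct Om_nonempty as [z0 Hz0]; exists (- (f z0 + a * nsq (hsub z0 c))); exists z0; auto. }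
  destruct (completeness E Hb Hex) as [L [HL1 HL2]].
  destruct (classic (exists z, Om z /\ - (f z + a * nsq (hsub z c)) > L - d))
    as [[z [Hz Hgt]]|Hno].
  - exists z; intros _ _; split; [exact Hz|]; intros z' Hz'.
    assert (- (f z' + a * nsq (hsub z' c)) <= L) by (apply HL1; exists z'; auto); lra.
  - exfalso; enough (L <= L - d) by lra.
    apply HL2; intros y [z [Hz ->]]; apply Rnot_lt_le; intro Hlt.
    apply Hno; exists z; split; auto; lra.
Qed.

Definition approx_argmin c a d :=
  proj1_sig (constructive_indefinite_description _ (approx_argmin_exists c a d)).

Lemma approx_argmin_spec c a d : 0 <= a -> d > 0 -> Om (approx_argmin c a d) /\
  forall z', Om z' -> f (approx_argmin c a d) + a * nsq (hsub (approx_argmin c a d) c)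
                     <= f z' + a * nsq (hsub z' c) + d.
Proof. unfold approx_argmin; destruct (constructive_indefinite_description _ _); auto. Qed.

Section Iteration.
Variables sig rho : R.
Hypothesis sig_pos : sig > 0.
Hypothesis rho_pos : 0 < rho.

(* Stage k: point z_k minimizes f + w_k |. - c_k|^2 up to tol k, where the
   weights w_k increase to sig and c_(k+1) is the center that turns
   w_k |. - c_k|^2 + (w_(k+1) - w_k) |. - z_k|^2 into w_(k+1) |. - c_(k+1)|^2
   up to a constant. *)
Definition tol k := sig * rho ^ 2 * (/8) ^ k.
Definition weight k := sig * (1 - (/2) ^ k).
Definition weight_incr k := sig * (/2) ^ (S k).
Definition center_step k := weight_incr k / weight (S k).

Fixpoint stage (k : nat) : H * H :=
  match k with
  | O => (hzero H, approx_argmin (hzero H) (weight 0) (tol 0))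
  | S k' => let c := hadd H (fst (stage k'))
                       (hscal H (center_step k') (hsub (snd (stage k')) (fst (stage k')))) in
            (c, approx_argmin c (weight (S k')) (tol (S k')))
  end.

Definition center k := fst (stage k).
Definition point k := snd (stage k).

Lemma weight_ge0 k : 0 <= weight k.
Proof. unfold weight; pose proof (pow_le1 (/2) k ltac:(lra)); nra. Qed.

Lemma tol_pos k : tol k > 0.
Proof.
  unfold tol; repeat apply Rmult_lt_0_compat; try apply pow_lt; lra.
Qed.

Lemma weight_S k : weight (S k) = weight k + weight_incr k.
Proof. unfold weight, weight_incr; simpl; field. Qed.

Lemma weight_incr_pos k : weight_incr k > 0.
Proof. unfold weight_incr; pose proof (half_pow_pos (S k)); nra. Qed.

Lemma center_step_range k : 0 <= center_step k <= 1.
Proof.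
  unfold center_step; rewrite weight_S.
  pose proof (weight_ge0 k); pose proof (weight_incr_pos k).
  split; [apply Rlt_le, Rdiv_lt_0_compat; lra|].
  apply Rmult_le_reg_r with (weight k + weight_incr k); [lra|].
  unfold Rdiv; rewrite Rmult_assoc, Rinv_l; lra.
Qed.

Lemma center_step_le k : center_step k <= (/2) ^ k.
Proof.
  assert (Hw : weight (S k) >= sig / 2)
    by (unfold weight; simpl; pose proof (pow_le1 (/2) k ltac:(lra)); nra).
  unfold center_step; apply Rmult_le_reg_r with (weight (S k)); [lra|].
  unfold Rdiv; rewrite Rmult_assoc, Rinv_l by lra.
  unfold weight_incr; simpl; pose proof (half_pow_pos k); nra.
Qed.

Lemma center_step0 : center_step 0 = 1.
Proof. unfold center_step, weight_incr, weight; simpl; field; lra. Qed.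

Lemma center_S k :
  center (S k) = hadd H (center k) (hscal H (center_step k) (hsub (point k) (center k))).
Proof. reflexivity. Qed.

Lemma point_spec k : Om (point k) /\ forall z', Om z' ->
  f (point k) + weight k * nsq (hsub (point k) (center k))
  <= f z' + weight k * nsq (hsub z' (center k)) + tol k.
Proof.
  destruct k; unfold point, center; simpl;
    (apply approx_argmin_spec; [apply weight_ge0|apply tol_pos]).
Qed.

Lemma point_step_sq k :
  weight_incr k * nsq (hsub (point (S k)) (point k)) <= tol k + tol (S k).
Proof.
  destruct (point_spec k) as [Hk Sk]; destruct (point_spec (S k)) as [HSk SSk].
  pose proof (SSk (point k) Hk) as A; pose proof (Sk (point (S k)) HSk) as B.
  rewrite center_S in A; unfold center_step in A; rewrite weight_S in A.
  assert (Hne : weight k + weight_incr k <> 0)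
    by (pose proof (weight_ge0 k); pose proof (weight_incr_pos k); lra).
  pose proof (recenter_sq_dist H _ _ (center k) (point k) (point (S k)) (point k) Hne) as R;
    simpl in R.
  assert (Z : nsq (hsub (point k) (point k)) = 0) by (rewrite hinner_sub_sq; ring).
  rewrite Z, Rmult_0_r in R; lra.
Qed.

Lemma point_step k : hnorm (hsub (point (S k)) (point k)) <= 2 * rho * (/2) ^ k.
Proof.
  pose proof (point_step_sq k) as A; pose proof (half_pow_pos k) as Hq.
  apply hnorm_le; [nra|].
  pose proof (hinner_pos H (hsub (point (S k)) (point k))).
  unfold tol, weight_incr in A; simpl in A.
  replace ((/8) ^ k) with ((/2) ^ k * (/2) ^ k * (/2) ^ k) in A
    by (rewrite <- !Rpow_mult_distr; f_equal; field).
  set (q := (/2) ^ k) in *; set (d := nsq (hsub (point (S k)) (point k))) in *.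
  assert (d * (sig * q) <= rho * rho * (q * q) * (9 / 4) * (sig * q)) by nra.
  assert (d <= rho * rho * (q * q) * (9 / 4)) by (apply Rmult_le_reg_r with (sig * q); nra).
  nra.
Qed.

Lemma point_conv : exists zl, conv point zl /\
  forall k, hnorm (hsub (point k) zl) <= 4 * rho * (/2) ^ k.
Proof.
  destruct (geometric_conv H point (2 * rho)) as [zl [Hc Hb]]; [lra|apply point_step|].
  exists zl; split; [exact Hc|]; intro k; specialize (Hb k); lra.
Qed.

Section Limits.
Variable zl : H.
Hypothesis point_rate : forall k, hnorm (hsub (point k) zl) <= 4 * rho * (/2) ^ k.

Lemma point_near0 k : hnorm (hsub (point k) (point 0)) <= 8 * rho.
Proof.
  eapply Rle_trans; [apply (hnorm_sub_triangle H _ zl)|].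
  rewrite (hnorm_subC H zl); pose proof (point_rate k); pose proof (point_rate 0%nat).
  pose proof (pow_le1 (/2) k ltac:(lra)); simpl in *; nra.
Qed.

Lemma center_near0 k : hnorm (hsub (center (S k)) (point 0)) <= 8 * rho.
Proof.
  assert (Hstep : forall j, hnorm (hsub (center (S j)) (point 0)) <=
     (1 - center_step j) * hnorm (hsub (center j) (point 0))
     + center_step j * hnorm (hsub (point j) (point 0))).
  { intro j; pose proof (center_step_range j).
    replace (hsub (center (S j)) (point 0)) with
      (hadd H (hscal H (1 - center_step j) (hsub (center j) (point 0)))
              (hscal H (center_step j) (hsub (point j) (point 0)))) by (rewrite center_S; hvec).
    eapply Rle_trans; [apply hnorm_triangle|].
    rewrite !hnorm_scal_ge0 by lra; lra. }
  induction k as [|k IH].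
  - eapply Rle_trans; [apply Hstep|]; rewrite center_step0, hnorm_subxx; lra.
  - eapply Rle_trans; [apply Hstep|].
    pose proof (center_step_range (S k)); pose proof (point_near0 (S k)); nra.
Qed.

Lemma center_conv : exists cl, conv (fun k => center (S k)) cl.
Proof.
  destruct (geometric_conv H (fun k => center (S k)) (16 * rho)) as [cl [Hc _]]; [lra| |].
  2: exists cl; exact Hc.
  intro k; simpl.
  replace (hsub (center (S (S k))) (center (S k)))
    with (hscal H (center_step (S k)) (hsub (point (S k)) (center (S k))))
    by (rewrite (center_S (S k)); hvec).
  rewrite hnorm_scal_ge0 by apply center_step_range.
  assert (D : hnorm (hsub (point (S k)) (center (S k))) <= 16 * rho).
  { eapply Rle_trans; [apply (hnorm_sub_triangle H _ (point 0))|].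
    rewrite (hnorm_subC H (point 0)).
    pose proof (point_near0 (S k)); pose proof (center_near0 k); lra. }
  pose proof (center_step_le (S k)); simpl in *; pose proof (half_pow_pos k).
  pose proof (hnorm_ge0 H (hsub (point (S k)) (center (S k)))); nra.
Qed.

End Limits.

Lemma weight_cv : Un_cv (fun k => weight (S k)) sig.
Proof.
  pose proof (CV_mult _ _ _ _ (cv_const sig)
    (CV_minus _ _ _ _ (cv_const 1) (cv_shift _ _ (pow_cv0 (/2) ltac:(lra))))) as W.
  rewrite Rminus_0_r, Rmult_1_r in W; exact W.
Qed.

Lemma tol_cv : Un_cv (fun k => tol (S k)) 0.
Proof.
  pose proof (CV_mult _ _ _ _ (cv_const (sig * rho ^ 2))
    (cv_shift _ _ (pow_cv0 (/8) ltac:(lra)))) as W.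
  rewrite Rmult_0_r in W; exact W.
Qed.

Lemma limit_minimizes zl cl : conv point zl -> conv (fun k => center (S k)) cl -> Om zl ->
  forall z, Om z -> f zl + sig * nsq (hsub zl cl) <= f z + sig * nsq (hsub z cl).
Proof.
  intros Hzc Hcc Hzl z Hz.
  apply (@Rle_cv_lim
    (fun k => f (point (S k)) + weight (S k) * nsq (hsub (point (S k)) (center (S k))))
    (fun k => f z + weight (S k) * nsq (hsub z (center (S k))) + tol (S k))).
  - intro k; apply (point_spec (S k)), Hz.
  - apply CV_plus.
    + apply (f_cont (fun k => point (S k))); [intro n; apply point_spec|exact Hzl|].
      apply conv_shift, Hzc.
    + apply CV_mult; [exact weight_cv|]; apply conv_hinner_sq, conv_sub; [apply conv_shift|]; auto.
  - replace (f z + sig * nsq (hsub z cl)) with (f z + sig * nsq (hsub z cl) + 0) by ring.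
    apply CV_plus; [apply CV_plus; [apply cv_const|]|exact tol_cv].
    apply CV_mult; [exact weight_cv|]; apply conv_hinner_sq, conv_sub; [apply conv_const|exact Hcc].
Qed.

Lemma smooth_variational_rho : exists zb c, Om zb /\
  (forall z, Om z -> f zb + sig * nsq (hsub zb c) <= f z + sig * nsq (hsub z c)) /\
  hnorm (hsub zb c) <= 16 * rho /\
  (forall z, Om z -> f zb <= f z + tol 0 + sig * (8 * rho * (8 * rho))).
Proof.
  destruct point_conv as [zl [Hzc Hzb]].
  destruct (center_conv zl Hzb) as [cl Hcc].
  assert (Hzl : Om zl) by (apply (Om_closed point); [intro n; apply point_spec|exact Hzc]).
  assert (Hcl : hnorm (hsub cl (point 0)) <= 8 * rho)
    by (apply (conv_le_bound H (fun k => center (S k))); [exact Hcc|apply (center_near0 zl Hzb)]).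
  assert (Hzl0 : hnorm (hsub zl (point 0)) <= 8 * rho)
    by (apply (conv_le_bound H point); [exact Hzc|apply (point_near0 zl Hzb)]).
  pose proof (limit_minimizes zl cl Hzc Hcc Hzl) as Hmin.
  exists zl, cl; split; [exact Hzl|]; split; [exact Hmin|]; split.
  - eapply Rle_trans; [apply (hnorm_sub_triangle H _ (point 0))|].
    rewrite (hnorm_subC H (point 0)); lra.
  - intros z Hz; destruct (point_spec 0) as [H0 H0s].
    pose proof (Hmin (point 0) H0) as A; pose proof (H0s z Hz) as A0.
    unfold weight in A0; simpl in A0.
    assert (B : nsq (hsub (point 0) cl) <= 8 * rho * (8 * rho)).
    { rewrite <- hnorm_sq, hnorm_subC; pose proof (hnorm_ge0 H (hsub cl (point 0))); nra. }
    pose proof (hinner_pos H (hsub zl cl)); nra.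
Qed.

End Iteration.

Theorem smooth_variational sig eta : sig > 0 -> eta > 0 ->
  exists zb c, Om zb /\
  (forall z, Om z -> f zb + sig * nsq (hsub zb c) <= f z + sig * nsq (hsub z c)) /\
  nsq (hsub zb c) <= 1 /\ (forall z, Om z -> f zb <= f z + eta).
Proof.
  intros Hs He.
  set (rho := Rmin (1 / 16) (eta / (65 * (sig + 1)))).
  assert (Hr1 : rho <= 1 / 16) by apply Rmin_l.
  assert (Hr2 : rho <= eta / (65 * (sig + 1))) by apply Rmin_r.
  assert (Hr0 : 0 < rho) by (apply Rmin_pos; [lra|apply Rdiv_lt_0_compat; lra]).
  destruct (smooth_variational_rho sig rho Hs Hr0) as [zb [c [Hz [Hm [Hn Hf]]]]].
  exists zb, c; split; [exact Hz|]; split; [exact Hm|]; split.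
  - rewrite <- hnorm_sq; pose proof (hnorm_ge0 H (hsub zb c)); nra.
  - intros z Hz'; specialize (Hf z Hz'); unfold tol in Hf; simpl in Hf.
    assert (65 * sig * rho <= eta).
    { apply Rmult_le_compat_l with (r := 65 * sig) in Hr2; [|lra].
      replace (65 * sig * (eta / (65 * (sig + 1)))) with (eta * (sig / (sig + 1))) in Hr2
        by (field; lra).
      assert (sig / (sig + 1) <= 1)
        by (apply Rmult_le_reg_r with (sig + 1); [lra|];
            unfold Rdiv; rewrite Rmult_assoc, Rinv_l; lra).
      nra. }
    nra.
Qed.

End SmoothVariational.

Lemma small_param_ge0 K Q h0 : h0 > 0 -> 0 <= Q ->
  (forall h, 0 < h <= h0 -> 0 <= K + h * Q) -> 0 <= K.
Proof.
  intros Hh0 HQ Ht; apply Rnot_lt_le; intro HK.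
  set (h := Rmin h0 (- K / (2 * (Q + 1)))).
  assert (h1 : h <= h0) by apply Rmin_l.
  assert (h2 : h <= - K / (2 * (Q + 1))) by apply Rmin_r.
  assert (h3 : 0 < h) by (apply Rmin_pos; [lra|apply Rdiv_lt_0_compat; lra]).
  specialize (Ht h (conj h3 h1)).
  apply Rmult_le_compat_r with (r := 2 * (Q + 1)) in h2; [|lra].
  replace (- K / (2 * (Q + 1)) * (2 * (Q + 1))) with (- K) in h2 by (field; lra).
  nra.
Qed.

(* Minty's theorem, via the Fitzpatrick function
   F(x, y) = sup_{(a,b) in gph T} <x,b> + <a,y> - <a,b>: the convex function
   F(x, y) + (|x|^2 + |y|^2)/2 attains its minimum at some (x0, y0), and the
   first order condition at this minimizer shows (-y0, -x0) in gph T and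
   x0 + y0 = 0. *)
Section Minty.
Variable X : HilbertSpace.
Variable T : X -> X -> Prop.
Hypothesis T_maxmono : maximal_monotone T.
Hypothesis T_proper : proper T.

Local Notation ip := (hinner X).

Lemma maximal_monotone_mem x y :
  (forall a b, T a b -> 0 <= ip (hsub y b) (hsub x a)) -> T x y.
Proof.
  intros Hr; destruct T_maxmono as [Hm Hmax].
  set (S := fun u v => T u v \/ (u = x /\ v = y)).
  assert (HS : monotone S).
  { intros u1 v1 u2 v2 [H1|[-> ->]] [H2|[-> ->]].
    - apply Hm; auto.
    - specialize (Hr u1 v1 H1); rewrite !hinner_subl, !hinner_subr in Hr |- *.
      rewrite (hinner_sym X y x), (hinner_sym X y u1), (hinner_sym X v1 x) in *; lra.
    - apply Hr; auto.
    - rewrite hinner_subl, !hinner_subr; lra. }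
  apply (Hmax S HS (fun u v H => or_introl H)); right; auto.
Qed.

Definition fitz_le x y c := forall a b, T a b -> ip x b + ip a y - ip a b <= c.
Definition half_sq (x y : X) := (ip x x + ip y y) / 2.

Lemma fitz_le_inner x y c : fitz_le x y c -> ip x y <= c.
Proof.
  intro HF; apply Rnot_lt_le; intro Hlt.
  assert (HT : T x y).
  { apply maximal_monotone_mem; intros a b Hab; specialize (HF a b Hab).
    rewrite !hinner_subl, !hinner_subr.
    rewrite (hinner_sym X y x), (hinner_sym X y a), (hinner_sym X b x), (hinner_sym X b a); lra. }
  specialize (HF x y HT); lra.
Qed.

Lemma fitz_le_graph a b : T a b -> fitz_le a b (ip a b).
Proof.
  intros Hab a' b' H'; destruct T_maxmono as [Hm _]; specialize (Hm a b a' b' Hab H').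
  rewrite !hinner_subl, !hinner_subr in Hm.
  rewrite (hinner_sym X b a), (hinner_sym X b a'), (hinner_sym X b' a), (hinner_sym X b' a') in Hm.
  lra.
Qed.

Lemma fitz_le_convex x y c x' y' c' t : 0 <= t <= 1 -> fitz_le x y c -> fitz_le x' y' c' ->
  fitz_le (hadd X x (hscal X t (hsub x' x))) (hadd X y (hscal X t (hsub y' y))) (c + t * (c' - c)).
Proof.
  intros Ht H1 H2 a b Hab; specialize (H1 a b Hab); specialize (H2 a b Hab).
  rewrite !hinner_addl, !hinner_addr, !hinner_scall, !hinner_scalr, !hinner_subl, !hinner_subr.
  assert (0 <= (1 - t) * (c - (ip x b + ip a y - ip a b))) by (apply Rmult_le_pos; lra).
  assert (0 <= t * (c' - (ip x' b + ip a y' - ip a b))) by (apply Rmult_le_pos; lra).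
  nra.
Qed.

Lemma fitz_le_half_sq x y c : fitz_le x y c -> 0 <= c + half_sq x y.
Proof.
  intro HF; pose proof (fitz_le_inner x y c HF); unfold half_sq.
  pose proof (hinner_pos X (hadd X x y)) as B; rewrite hinner_add_sq in B; lra.
Qed.

Definition fitz_values r := exists x y c, fitz_le x y c /\ r = - (c + half_sq x y).

Lemma fitz_values_lub : { L | is_lub fitz_values L }.
Proof.
  apply completeness.
  - exists 0; intros r [x [y [c [HF ->]]]]; pose proof (fitz_le_half_sq x y c HF); lra.
  - destruct T_proper as [a [b Hab]]; exists (- (ip a b + half_sq a b)).
    exists a, b, (ip a b); split; [apply fitz_le_graph, Hab|reflexivity].
Qed.

Definition fitz_inf := - proj1_sig fitz_values_lub.

Lemma fitz_inf_le x y c : fitz_le x y c -> fitz_inf <= c + half_sq x y.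
Proof.
  intro HF; unfold fitz_inf; destruct fitz_values_lub as [L [H1 H2]]; simpl.
  assert (- (c + half_sq x y) <= L) by (apply H1; exists x, y, c; auto); lra.
Qed.

Lemma fitz_inf_approx d : d > 0 -> exists x y c, fitz_le x y c /\ c + half_sq x y <= fitz_inf + d.
Proof.
  intro Hd; unfold fitz_inf; destruct fitz_values_lub as [L [H1 H2]]; simpl.
  apply NNPP; intro Hno; enough (L <= L - d) by lra.
  apply H2; intros r [x [y [c [HF ->]]]]; apply Rnot_lt_le; intro Hlt.
  apply Hno; exists x, y, c; split; [exact HF|lra].
Qed.

(* Parallelogram law: two near-minimizers are close, since their midpoint
   is admissible. *)
Lemma fitz_near_min_close x y c x' y' c' d d' :
  fitz_le x y c -> c + half_sq x y <= fitz_inf + d ->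
  fitz_le x' y' c' -> c' + half_sq x' y' <= fitz_inf + d' ->
  ip (hsub x x') (hsub x x') + ip (hsub y y') (hsub y y') <= 4 * (d + d').
Proof.
  intros F V F' V'.
  pose proof (fitz_inf_le _ _ _ (fitz_le_convex _ _ _ _ _ _ (/2) ltac:(lra) F F')) as M.
  pose proof (fitz_inf_le _ _ _ F); pose proof (fitz_inf_le _ _ _ F').
  unfold half_sq in *.
  rewrite !hinner_addl, !hinner_addr, !hinner_scall, !hinner_scalr, !hinner_subl,
    !hinner_subr in M.
  rewrite !hinner_sub_sq, (hinner_sym X x' x), (hinner_sym X y' y) in *; lra.
Qed.

Lemma fitz_min_exists : exists x0 y0, fitz_le x0 y0 (fitz_inf - half_sq x0 y0).
Proof.
  assert (Happrox : forall k : nat, exists p : X * X * R,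
    fitz_le (fst (fst p)) (snd (fst p)) (snd p) /\
    snd p + half_sq (fst (fst p)) (snd (fst p)) <= fitz_inf + (/2) ^ k * (/2) ^ k).
  { intro k; destruct (fitz_inf_approx ((/2) ^ k * (/2) ^ k)) as [x [y [c [H1 H2]]]].
    - pose proof (half_pow_pos k); nra.
    - exists (x, y, c); auto. }
  destruct (choice _ Happrox) as [p Hp].
  set (sx k := fst (fst (p k))); set (sy k := snd (fst (p k))).
  assert (Hstep : forall k, ip (hsub (sx (S k)) (sx k)) (hsub (sx (S k)) (sx k))
    + ip (hsub (sy (S k)) (sy k)) (hsub (sy (S k)) (sy k)) <= 3 * (/2) ^ k * (3 * (/2) ^ k)).
  { intro k; destruct (Hp (S k)) as [F V]; destruct (Hp k) as [F' V'].
    pose proof (fitz_near_min_close _ _ _ _ _ _ _ _ F V F' V'); simpl in *.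
    pose proof (half_pow_pos k); unfold sx, sy; nra. }
  destruct (geometric_conv X sx 3) as [x0 [Hx0 _]]; [lra| |].
  { intro k; apply hnorm_le; [pose proof (half_pow_pos k); lra|].
    specialize (Hstep k); pose proof (hinner_pos X (hsub (sy (S k)) (sy k))); lra. }
  destruct (geometric_conv X sy 3) as [y0 [Hy0 _]]; [lra| |].
  { intro k; apply hnorm_le; [pose proof (half_pow_pos k); lra|].
    specialize (Hstep k); pose proof (hinner_pos X (hsub (sx (S k)) (sx k))); lra. }
  exists x0, y0; intros a b Hab.
  apply (@Rle_cv_lim (fun k => ip (sx k) b + ip a (sy k) - ip a b)
                     (fun k => fitz_inf + (/2) ^ k * (/2) ^ k - half_sq (sx k) (sy k))).
  - intro k; destruct (Hp k) as [F V]; specialize (F a b Hab); fold (sx k) (sy k) in F, V; lra.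
  - apply CV_minus; [apply CV_plus|apply cv_const]; [apply conv_hinner, Hx0|].
    apply conv_hinner_r, Hy0.
  - replace (fitz_inf - half_sq x0 y0) with (fitz_inf + 0 * 0 - (ip x0 x0 + ip y0 y0) * / 2)
      by (unfold half_sq; field).
    apply CV_minus; [apply CV_plus; [apply cv_const|apply CV_mult; apply pow_cv0; lra]|].
    apply CV_mult; [apply CV_plus; apply conv_hinner_sq; auto|apply cv_const].
Qed.

Section Minimizer.
Variables x0 y0 : X.
Hypothesis fitz_min : fitz_le x0 y0 (fitz_inf - half_sq x0 y0).

(* Moving from the minimizer towards a graph point (a, b) cannot decrease
   F + half_sq; the derivative of this move at 0 gives the inequality. *)
Lemma fitz_min_first_order a b : T a b ->
  fitz_inf - half_sq x0 y0 + ip x0 x0 + ip y0 y0 <= ip a b + ip x0 a + ip y0 b.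
Proof.
  intros Hab.
  enough (0 <= ip a b - (fitz_inf - half_sq x0 y0) + ip x0 a - ip x0 x0 + ip y0 b - ip y0 y0)
    by lra.
  apply (small_param_ge0 _ ((ip (hsub a x0) (hsub a x0) + ip (hsub b y0) (hsub b y0)) / 2) 1);
    [lra|pose proof (hinner_pos X (hsub a x0)); pose proof (hinner_pos X (hsub b y0)); lra|].
  intros t Ht.
  pose proof (fitz_inf_le _ _ _
    (fitz_le_convex _ _ _ _ _ _ t ltac:(lra) fitz_min (fitz_le_graph a b Hab))) as M.
  unfold half_sq in *.
  rewrite !hinner_addl, !hinner_addr, !hinner_scall, !hinner_scalr, !hinner_subl,
    !hinner_subr in M.
  rewrite !hinner_subl, !hinner_subr, (hinner_sym X a x0), (hinner_sym X b y0) in *.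
  apply Rmult_le_reg_l with t; lra.
Qed.

Lemma fitz_min_graph : T (hopp X y0) (hopp X x0).
Proof.
  pose proof (fitz_le_inner _ _ _ fitz_min).
  pose proof (hinner_pos X (hadd X x0 y0)) as Hs; rewrite hinner_add_sq in Hs.
  apply maximal_monotone_mem; intros a b Hab; pose proof (fitz_min_first_order a b Hab).
  rewrite !hinner_subl, !hinner_subr, !hinner_oppl, !hinner_oppr.
  rewrite (hinner_sym X b y0), (hinner_sym X b a); lra.
Qed.

Lemma fitz_min_opp : x0 = hopp X y0.
Proof.
  pose proof (fitz_le_inner _ _ _ fitz_min).
  pose proof (fitz_min_first_order _ _ fitz_min_graph) as K.
  rewrite !hinner_oppl, !hinner_oppr, (hinner_sym X y0 x0) in K.
  apply hsub_eq0; unfold hsub; rewrite (hinner_inj (hopp X (hopp X y0)) y0)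
    by (intro w; rewrite !hinner_oppl; ring).
  apply hinner_def, Rle_antisym; [|apply hinner_pos].
  rewrite hinner_add_sq; lra.
Qed.

End Minimizer.

Lemma maximal_monotone_opp_fixed : exists x, T x (hopp X x).
Proof.
  destruct fitz_min_exists as [x0 [y0 Hmin]].
  exists x0; rewrite (fitz_min_opp _ _ Hmin) at 1; apply fitz_min_graph, Hmin.
Qed.

End Minty.

Lemma maximal_monotone_shift (X : HilbertSpace) (T : X -> X -> Prop) w :
  maximal_monotone T -> maximal_monotone (fun a b => T a (hadd X b w)).
Proof.
  intros [Hm Hmax].
  assert (Shift : forall v1 v2 d, hinner X (hsub (hadd X v1 w) (hadd X v2 w)) d
                                  = hinner X (hsub v1 v2) d)
    by (intros; hinner_simpl; ring).
  split.
  - intros u1 v1 u2 v2 H1 H2; rewrite <- Shift; apply Hm; assumption.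
  - intros S HS HTS.
    assert (Ew : forall v, hadd X (hsub v w) w = v) by (intro; hvec).
    assert (Ew' : forall v, hsub (hadd X v w) w = v) by (intro; hvec).
    set (S' := fun u v => S u (hsub v w)).
    assert (HS' : monotone S').
    { intros u1 v1 u2 v2 H1 H2; unfold S' in *.
      rewrite <- (Ew v1), <- (Ew v2), Shift; apply HS; assumption. }
    assert (HTS' : forall u v, T u v -> S' u v)
      by (intros u v Huv; apply HTS; rewrite Ew; exact Huv).
    intros u v; specialize (Hmax S' HS' HTS' u (hadd X v w)); unfold S' in Hmax.
    rewrite Ew' in Hmax; exact Hmax.
Qed.

Theorem minty_surjective (X : HilbertSpace) (T : X -> X -> Prop) :
  maximal_monotone T -> proper T -> forall w, exists a b, T a b /\ hadd X a b = w.
Proof.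
  intros Hmax Hp w.
  assert (Hp' : proper (fun a b => T a (hadd X b w))).
  { destruct Hp as [a [b Hab]]; exists a, (hsub b w).
    replace (hadd X (hsub b w) w) with b by hvec; exact Hab. }
  destruct (maximal_monotone_opp_fixed X _ (maximal_monotone_shift X T w Hmax) Hp')
    as [x Hx].
  exists x, (hadd X (hopp X x) w); split; [exact Hx|hvec].
Qed.

Lemma monotone_hypomonotone (X : HilbertSpace) (T : X -> X -> Prop) :
  monotone T -> hypomonotone T.
Proof.
  intro Hm; exists 1; split; [lra|]; intros u1 v1 u2 v2 H1 H2.
  specialize (Hm _ _ _ _ H1 H2); pose proof (pow2_ge_0 (hnorm (hsub u1 u2))); lra.
Qed.

(* Resolvent step of length t in the direction (z - w): by Minty's theorem
   some (a, b) in gph T has a + b = u + v + t (z - w). *)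
Lemma maximal_monotone_probe (X : HilbertSpace) (T : X -> X -> Prop) u v w z t :
  maximal_monotone T -> proper T -> T u v -> t > 0 ->
  exists a b, T a b /\
    pnorm (psub (a, b) (u, v)) <= t * hnorm (hsub z w) /\
    - t * hinner X z w <= pinner (z, hopp X w) (psub (a, b) (u, v)).
Proof.
  intros Hmax Hp Huv Ht.
  destruct (minty_surjective X T Hmax Hp (hadd X (hadd X u v) (hscal X t (hsub z w))))
    as [a [b [Hab Es]]].
  exists a, b; split; [exact Hab|].
  set (A := hsub a u); set (B := hsub b v).
  assert (ES : hadd X A B = hscal X t (hsub z w)).
  { apply hinner_inj; intro q; pose proof (f_equal (fun y => hinner X y q) Es) as Eq.
    simpl in Eq; unfold A, B; hinner_simpl; rewrite !hinner_addl, !hinner_scall, !hinner_subl in Eq.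
    lra. }
  assert (Hmono : 0 <= hinner X B A) by (apply (proj1 Hmax); assumption).
  pose proof (f_equal (fun y => hinner X y A) ES) as EA; simpl in EA.
  pose proof (f_equal (fun y => hinner X y w) ES) as EW; simpl in EW.
  rewrite hinner_addl, hinner_scall, hinner_subl in EA, EW.
  unfold pnorm, pinner, psub; simpl; fold A B; rewrite hinner_oppl.
  split.
  - apply sqrt_le_square; [pose proof (hnorm_ge0 X (hsub z w)); nra|].
    replace (t * hnorm (hsub z w) * (t * hnorm (hsub z w)))
      with (hinner X (hadd X A B) (hadd X A B))
      by (rewrite ES, hinner_scall, hinner_scalr, <- hnorm_sq; ring).
    rewrite hinner_add_sq, (hinner_sym X A B); lra.
  - pose proof (hinner_pos X (hadd X A (hscal X t w))) as HAt.
    rewrite hinner_add_sq, !hinner_scalr, hinner_scall in HAt.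
    rewrite (hinner_sym X w A), (hinner_sym X z A), (hinner_sym X B w) in *.
    assert (0 <= t * (hinner X A z + hinner X A w + t * hinner X w w)) by nra.
    assert (0 <= hinner X A z + hinner X A w + t * hinner X w w)
      by (apply Rmult_le_reg_l with t; lra).
    lra.
Qed.

Lemma pinner_pnorm0 (X : HilbertSpace) (p q : X * X) : pnorm p = 0 -> pinner q p = 0.
Proof.
  unfold pnorm, pinner; intro E; destruct p as [a b]; simpl in *.
  pose proof (hinner_pos X a); pose proof (hinner_pos X b).
  apply sqrt_eq_0 in E; [|lra].
  assert (Ea : a = hzero X) by (apply hinner_def; lra).
  assert (Eb : b = hzero X) by (apply hinner_def; lra).
  rewrite Ea, Eb, !hinner_0r; ring.
Qed.

Lemma pnorm_ge0 (X : HilbertSpace) (p : X * X) : 0 <= pnorm p.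
Proof. apply sqrt_pos. Qed.

Lemma maximal_monotone_coderiv_ge0 (X : HilbertSpace) (T : X -> X -> Prop) u v w z :
  maximal_monotone T -> proper T -> T u v -> reg_coderiv T u v w z -> 0 <= hinner X z w.
Proof.
  intros Hmax Hp Huv Hreg; apply Rnot_lt_le; intro Hneg.
  set (kap := - hinner X z w); set (L := hnorm (hsub z w)).
  assert (Hk : kap > 0) by (unfold kap; lra).
  assert (HL : 0 <= L) by apply hnorm_ge0.
  destruct (Hreg (kap / (L + 1))) as [del [Hdel Hd]]; [apply Rdiv_lt_0_compat; lra|].
  set (t := del / (2 * (L + 1))).
  assert (Ht : t > 0) by (apply Rdiv_lt_0_compat; lra).
  destruct (maximal_monotone_probe X T u v w z t Hmax Hp Huv Ht) as [a [b [Hab [Hn HP]]]].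
  replace (- t * hinner X z w) with (t * kap) in HP by (unfold kap; ring); fold L in Hn.
  set (pn := pnorm (psub (a, b) (u, v))) in *.
  set (P := pinner (z, hopp X w) (psub (a, b) (u, v))) in *.
  assert (Hpos : 0 < pn).
  { destruct (Rle_lt_or_eq_dec 0 pn (pnorm_ge0 X _)) as [|E]; [assumption|].
    unfold P in HP; rewrite (pinner_pnorm0 X _ _ (eq_sym E)) in HP; nra. }
  assert (HtL : t * L < del).
  { unfold t; apply Rmult_lt_reg_r with (2 * (L + 1)); [lra|].
    replace (del / (2 * (L + 1)) * L * (2 * (L + 1))) with (del * L) by (field; lra).
    apply Rmult_lt_compat_l; lra. }
  assert (Hlt : pn < del) by lra.
  specialize (Hd (a, b) Hab (conj Hpos Hlt)); fold pn P in Hd.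
  apply Rmult_le_compat_r with (r := pn) in Hd; [|lra].
  replace (P / pn * pn) with P in Hd by (field; lra).
  assert (Hb : kap / (L + 1) * pn <= kap / (L + 1) * (t * L))
    by (apply Rmult_le_compat_l; [apply Rlt_le, Rdiv_lt_0_compat|]; lra).
  replace (kap / (L + 1) * (t * L)) with (t * kap * (L / (L + 1))) in Hb by (field; lra).
  assert (L / (L + 1) < 1)
    by (apply Rmult_lt_reg_r with (L + 1); [lra|]; unfold Rdiv; rewrite Rmult_assoc, Rinv_l; lra).
  assert (t * kap > 0) by nra.
  nra.
Qed.

Lemma regular_normal_of_quadratic (X : HilbertSpace) (Om : X * X -> Prop) pbar q K : K > 0 ->
  (forall p, Om p -> pinner q (psub p pbar) <= K * pinner (psub p pbar) (psub p pbar)) ->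
  regular_normal Om pbar q.
Proof.
  intros HK Hq eps He; exists (eps / K); split; [apply Rdiv_lt_0_compat; lra|].
  intros p Hp [H1 H2]; specialize (Hq p Hp).
  set (n := pnorm (psub p pbar)) in *.
  assert (E : pinner (psub p pbar) (psub p pbar) = n * n).
  { unfold n, pnorm; rewrite sqrt_sqrt; [reflexivity|].
    unfold pinner; pose proof (hinner_pos X (fst (psub p pbar)));
      pose proof (hinner_pos X (snd (psub p pbar))); lra. }
  rewrite E in Hq; apply Rmult_le_reg_r with n; [lra|].
  unfold Rdiv; rewrite Rmult_assoc, Rinv_l, Rmult_1_r by lra.
  apply Rmult_lt_compat_l with (r := K) in H2; [|lra].
  replace (K * (eps / K)) with eps in H2 by (field; lra); nra.
Qed.

Section Coordinates.
Variable X : HilbertSpace.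
Variable T : X -> X -> Prop.
Variable r : R.
Hypothesis r_pos : r > 0.
Hypothesis T_hypo : forall u1 v1 u2 v2, T u1 v1 -> T u2 v2 ->
  hinner X (hsub v1 v2) (hsub u1 u2) >= - r * (hnorm (hsub u1 u2)) ^ 2.

Local Notation ip := (hinner X).

Definition lam := / (4 * r).

Lemma lam_pos : lam > 0.
Proof. unfold lam; apply Rinv_0_lt_compat; lra. Qed.

Definition xco (u v : X) := hadd X u (hscal X lam v).
Definition yco (u v : X) := hsub u (hscal X lam v).

Lemma xco_sub u v u' v' :
  hsub (xco u' v') (xco u v) = hadd X (hsub u' u) (hscal X lam (hsub v' v)).
Proof. unfold xco; hvec. Qed.

Lemma yco_sub u v u' v' :
  hsub (yco u' v') (yco u v) = hsub (hsub u' u) (hscal X lam (hsub v' v)).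
Proof. unfold yco; hvec. Qed.

Lemma yco_lipschitz u v u' v' : T u v -> T u' v' ->
  hnorm (hsub (yco u' v') (yco u v)) <= 2 * hnorm (hsub (xco u' v') (xco u v)).
Proof.
  intros Huv Huv'; pose proof (T_hypo _ _ _ _ Huv' Huv) as Hy.
  rewrite yco_sub, xco_sub; set (Du := hsub u' u) in *; set (Dv := hsub v' v) in *.
  simpl in Hy; rewrite Rmult_1_r, hnorm_sq, (hinner_sym X Dv Du) in Hy.
  apply hnorm_le; [pose proof (hnorm_ge0 X (hadd X Du (hscal X lam Dv))); lra|].
  replace (2 * hnorm (hadd X Du (hscal X lam Dv)) * (2 * hnorm (hadd X Du (hscal X lam Dv))))
    with (4 * ip (hadd X Du (hscal X lam Dv)) (hadd X Du (hscal X lam Dv)))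
    by (rewrite <- hnorm_sq; ring).
  rewrite hinner_add_sq, hinner_sub_sq, !hinner_scalr, !hinner_scall.
  pose proof lam_pos; assert (Lr : lam * r = / 4) by (unfold lam; field; lra).
  pose proof (hinner_pos X Du); pose proof (hinner_pos X Dv).
  assert (lam * ip Du Dv >= - (lam * r) * ip Du Du) by nra.
  nra.
Qed.

Lemma violation_stretches u1 v1 u2 v2 : ip (hsub v1 v2) (hsub u1 u2) < 0 ->
  hnorm (hsub (xco u2 v2) (xco u1 v1)) < hnorm (hsub (yco u2 v2) (yco u1 v1)).
Proof.
  intro Hneg; apply sqrt_lt_1_alt; split; [apply hinner_pos|].
  rewrite xco_sub, yco_sub, (hinner_add_sq X (hsub u2 u1)), (hinner_sub_sq X (hsub u2 u1)),
    !hinner_scalr, !hinner_scall.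
  replace (ip (hsub v1 v2) (hsub u1 u2)) with (ip (hsub u2 u1) (hsub v2 v1)) in Hneg
    by (rewrite !hinner_subl, !hinner_subr, (hinner_sym X v1 u1), (hinner_sym X v1 u2),
          (hinner_sym X v2 u1), (hinner_sym X v2 u2); ring).
  pose proof lam_pos; nra.
Qed.

End Coordinates.

Lemma gradient_pair_bound (H : HilbertSpace) (e p a b : H) lam sg c :
  hinner H e e = 1 -> hnorm a <= 1 -> hnorm b <= 1 -> 0 <= lam -> 0 <= sg -> 0 <= c ->
  hinner H (hsub (hsub e (hscal H c p)) (hscal H (2 * sg) a))
           (hadd H (hscal H lam (hadd H e (hscal H c p))) (hscal H (2 * sg) b))
  <= lam * (1 - (c * hnorm p) * (c * hnorm p)) + 2 * sg * (1 + c * hnorm p) * (1 + lam)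
     + 4 * sg * sg.
Proof.
  intros He Ha Hb Hl Hs Hc.
  set (E1 := hsub e (hscal H c p)); set (E2 := hadd H e (hscal H c p)).
  assert (N1 : hnorm E1 <= 1 + c * hnorm p)
    by (unfold E1; eapply Rle_trans; [apply hnorm_sub_le|];
        rewrite hnorm_scal_ge0 by lra; unfold hnorm at 1; rewrite He, sqrt_1; lra).
  assert (N2 : hnorm E2 <= 1 + c * hnorm p)
    by (unfold E2; eapply Rle_trans; [apply hnorm_triangle|];
        rewrite hnorm_scal_ge0 by lra; unfold hnorm at 1; rewrite He, sqrt_1; lra).
  assert (E12 : hinner H E1 E2 = 1 - (c * hnorm p) * (c * hnorm p)).
  { unfold E1, E2; rewrite hinner_subl, !hinner_addr, !hinner_scall, !hinner_scalr.
    rewrite He, (hinner_sym H p e); replace ((c * hnorm p) * (c * hnorm p))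
      with (c * c * (hnorm p * hnorm p)) by ring; rewrite hnorm_sq; ring. }
  rewrite hinner_subl, !hinner_addr, !hinner_scall, !hinner_scalr, E12.
  pose proof (hinner_le_norm H E1 b); pose proof (hinner_ge_norm H a E2);
    pose proof (hinner_ge_norm H a b).
  pose proof (hnorm_ge0 H a); pose proof (hnorm_ge0 H b); pose proof (hnorm_ge0 H p);
    pose proof (hnorm_ge0 H E1); pose proof (hnorm_ge0 H E2).
  assert (hinner H E1 b <= 1 + c * hnorm p) by nra.
  assert (- hinner H a E2 <= 1 + c * hnorm p) by nra.
  assert (- hinner H a b <= 1) by nra.
  assert (2 * sg * hinner H E1 b <= 2 * sg * (1 + c * hnorm p)) by (apply Rmult_le_compat_l; lra).
  assert (2 * sg * lam * - hinner H a E2 <= 2 * sg * lam * (1 + c * hnorm p))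
    by (apply Rmult_le_compat_l; nra).
  assert (4 * sg * sg * - hinner H a b <= 4 * sg * sg * 1) by (apply Rmult_le_compat_l; nra).
  nra.
Qed.

Lemma violation_numerics lam nx gap sg M :
  lam > 0 -> 0 <= nx -> gap > 0 -> 0 < sg -> sg <= 1 ->
  sg * (4 * lam + (12 + 4 * lam) * nx) <= gap * lam -> 0 <= M ->
  0 <= lam * (1 - M * M) + 2 * sg * (1 + M) * (1 + lam) + 4 * sg * sg ->
  nx + gap <= M * nx + 2 * sg -> False.
Proof.
  intros Hl Hn Hg Hs0 Hs1 Hsmall HM Hgrad Hslope.
  assert (Hnx : 0 <= sg * (6 + 2 * lam) * nx) by (apply Rmult_le_pos; nra).
  assert (Hsmall' : 2 * (2 * sg * lam + sg * (6 + 2 * lam) * nx) <= gap * lam) by lra.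
  assert (Hgap : 4 * sg <= gap) by (apply Rmult_le_reg_r with lam; lra).
  assert (HM1 : M > 1) by nra.
  assert (HMl : lam * (M - 1) <= sg * (6 + 2 * lam)).
  { assert (4 * sg * sg <= 4 * sg * (M + 1)) by nra.
    apply Rmult_le_reg_r with (M + 1); nra. }
  assert (lam * (gap - 2 * sg) <= lam * (M - 1) * nx)
    by (rewrite Rmult_assoc; apply Rmult_le_compat_l; lra).
  assert (lam * (M - 1) * nx <= sg * (6 + 2 * lam) * nx) by (apply Rmult_le_compat_r; lra).
  assert (0 < sg * lam) by nra.
  lra.
Qed.

Lemma quadratic_lower_bound g n : g > 0 -> 4 / g * (n * n) - 2 * n >= - (g / 4).
Proof.
  intro Hg; enough (0 <= 4 / g * (n * n) - 2 * n + g / 4) by lra.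
  replace (4 / g * (n * n) - 2 * n + g / 4) with (4 / g * ((n - g / 4) * (n - g / 4)))
    by (field; lra).
  apply Rmult_le_pos; [apply Rlt_le, Rdiv_lt_0_compat; lra|apply Rle_0_sqr].
Qed.

Section Violation.
Variable X : HilbertSpace.
Variable T : X -> X -> Prop.
Hypothesis T_closed : closed_pset (gph T).
Variable r : R.
Hypothesis r_pos : r > 0.
Hypothesis T_hypo : forall u1 v1 u2 v2, T u1 v1 -> T u2 v2 ->
  hinner X (hsub v1 v2) (hsub u1 u2) >= - r * (hnorm (hsub u1 u2)) ^ 2.
Variables u1 v1 u2 v2 : X.
Hypothesis T1 : T u1 v1.
Hypothesis T2 : T u2 v2.
Hypothesis T12_neg : hinner X (hsub v1 v2) (hsub u1 u2) < 0.

Local Notation ip := (hinner X).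
Local Notation lam := (lam r).
Local Notation xco := (xco X r).
Local Notation yco := (yco X r).

Definition dx := hsub (xco u2 v2) (xco u1 v1).
Definition dy := hsub (yco u2 v2) (yco u1 v1).
Definition nx := hnorm dx.
Definition ny := hnorm dy.
Definition edir := hscal X (/ ny) dy.
Definition slope := (nx + ny) / 2.
Definition gap := (ny - nx) / 2.

Lemma nx_lt_ny : nx < ny.
Proof. apply (violation_stretches X); assumption. Qed.

Lemma nx_ge0 : 0 <= nx.
Proof. apply hnorm_ge0. Qed.

Lemma gap_pos : gap > 0.
Proof. unfold gap; pose proof nx_lt_ny; lra. Qed.

Lemma edir_unit : ip edir edir = 1.
Proof.
  pose proof nx_lt_ny; pose proof nx_ge0.
  unfold edir; rewrite hinner_scall, hinner_scalr, <- hnorm_sq; fold ny; field; lra.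
Qed.

Lemma edir_norm : hnorm edir = 1.
Proof. unfold hnorm; rewrite edir_unit; apply sqrt_1. Qed.

Lemma dy_edir : ip dy edir = ny.
Proof.
  pose proof nx_lt_ny; pose proof nx_ge0.
  unfold edir; rewrite hinner_scalr, <- hnorm_sq; fold ny; field; lra.
Qed.

(* Penalized objective on gph T x [0, 1]: the linear term rewards moving y
   in the direction of dy, the quadratic term keeps x on the segment from
   x(u1, v1) to x(u2, v2), traversed at parameter t. *)
Definition defect u v t := hsub (hsub (xco u v) (xco u1 v1)) (hscal X t dx).
Definition objective u v t :=
  - ip (yco u v) edir + slope * t + 4 / gap * ip (defect u v t) (defect u v t).
Definition base := - ip (yco u1 v1) edir.

Definition Zs := prodH (prodH X X) Rspace.
Definition zobj (z : Zs) := objective (fst (fst z)) (snd (fst z)) (snd z).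
Definition zdom (z : Zs) := T (fst (fst z)) (snd (fst z)) /\ 0 <= snd z <= 1.

Lemma objective_lower_aux u v t : T u v -> 0 <= t ->
  objective u v t >= base - 2 * hnorm (hsub (xco u v) (xco u1 v1))
                     + 4 / gap * ip (defect u v t) (defect u v t).
Proof.
  intros HT Ht; unfold objective, base.
  replace (ip (yco u v) edir) with (ip (yco u1 v1) edir + ip (hsub (yco u v) (yco u1 v1)) edir)
    by (rewrite hinner_subl; ring).
  pose proof (hinner_le_norm X (hsub (yco u v) (yco u1 v1)) edir) as B; rewrite edir_norm in B.
  pose proof (yco_lipschitz X T r r_pos T_hypo _ _ _ _ T1 HT).
  assert (0 <= slope * t)
    by (apply Rmult_le_pos; [unfold slope; pose proof nx_lt_ny; pose proof nx_ge0|]; lra).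
  lra.
Qed.

Lemma objective_lower u v t : T u v -> 0 <= t <= 1 -> objective u v t >= base - 2 * nx - gap / 4.
Proof.
  intros HT Ht; pose proof (objective_lower_aux u v t HT (proj1 Ht)).
  assert (hnorm (hsub (xco u v) (xco u1 v1)) <= hnorm (defect u v t) + nx).
  { replace (hsub (xco u v) (xco u1 v1)) with (hadd X (defect u v t) (hscal X t dx))
      by (unfold defect; hvec).
    eapply Rle_trans; [apply hnorm_triangle|]; rewrite hnorm_scal_ge0 by lra.
    pose proof nx_ge0; unfold nx in *; nra. }
  pose proof (quadratic_lower_bound gap (hnorm (defect u v t)) gap_pos); rewrite hnorm_sq in *.
  lra.
Qed.

Lemma objective_lower0 u v : T u v -> objective u v 0 >= base - gap / 4.
Proof.
  intro HT; pose proof (objective_lower_aux u v 0 HT (Rle_refl 0)).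
  replace (hsub (xco u v) (xco u1 v1)) with (defect u v 0) in * by (unfold defect; hvec).
  pose proof (quadratic_lower_bound gap (hnorm (defect u v 0)) gap_pos); rewrite hnorm_sq in *.
  lra.
Qed.

Lemma objective_end : objective u2 v2 1 = base - gap.
Proof.
  unfold objective, base.
  replace (defect u2 v2 1) with (hzero X) by (unfold defect, dx; hvec).
  replace (ip (yco u2 v2) edir) with (ip (yco u1 v1) edir + ip dy edir)
    by (unfold dy; rewrite hinner_subl; ring).
  rewrite dy_edir, hinner_0l; unfold gap, slope; lra.
Qed.

Lemma zdom_closed : seqclosed zdom.
Proof.
  intros s l Hs Hc; split.
  - apply (seqclosed_gph X T T_closed (fun n => fst (s n))); [intro n; apply (Hs n)|].
    apply (conv_fst (prodH X X) Rspace); exact Hc.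
  - apply (seqclosed_unit_interval (fun n => snd (s n))); [intro n; apply (Hs n)|].
    apply (conv_snd (prodH X X) Rspace); exact Hc.
Qed.

Lemma Zs_components (z l : Zs) :
  hnorm (hsub (fst (fst z)) (fst (fst l))) <= hnorm (hsub z l) /\
  hnorm (hsub (snd (fst z)) (snd (fst l))) <= hnorm (hsub z l) /\
  Rabs (snd z - snd l) <= hnorm (hsub z l).
Proof.
  pose proof (hnorm_sub_snd (prodH X X) Rspace z l) as Ht; rewrite hnorm_Rspace in Ht.
  repeat split; [| |exact Ht]; (eapply Rle_trans; [|apply (hnorm_sub_fst (prodH X X) Rspace)]).
  - apply (hnorm_sub_fst X X).
  - apply (hnorm_sub_snd X X).
Qed.

Lemma zobj_cont s l : conv s l -> Un_cv (fun n => zobj (s n)) (zobj l).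
Proof.
  intros Hc; unfold zobj, objective; pose proof lam_pos r r_pos; pose proof nx_ge0.
  apply CV_plus; [apply CV_plus|].
  - apply CV_opp, conv_hinner.
    apply (conv_lipschitz (fun z : Zs => yco (fst (fst z)) (snd (fst z))) (1 + lam));
      [lra| |exact Hc].
    intro n; rewrite yco_sub; eapply Rle_trans; [apply hnorm_sub_le|].
    rewrite hnorm_scal_ge0 by lra; destruct (Zs_components (s n) l) as [A [B _]]; nra.
  - apply CV_mult; [apply cv_const|]; apply conv_Rspace, (conv_snd (prodH X X) Rspace), Hc.
  - apply CV_mult; [apply cv_const|]; apply conv_hinner_sq.
    apply (conv_lipschitz (fun z : Zs => defect (fst (fst z)) (snd (fst z)) (snd z))
      (1 + lam + nx)); [lra| |exact Hc].
    intro n; destruct (Zs_components (s n) l) as [A [B C]].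
    replace (hsub (defect (fst (fst (s n))) (snd (fst (s n))) (snd (s n)))
                  (defect (fst (fst l)) (snd (fst l)) (snd l)))
      with (hsub (hadd X (hsub (fst (fst (s n))) (fst (fst l)))
                         (hscal X lam (hsub (snd (fst (s n))) (snd (fst l)))))
                 (hscal X (snd (s n) - snd l) dx)) by (unfold defect, xco; hvec).
    eapply Rle_trans; [apply hnorm_sub_le|].
    eapply Rle_trans; [apply Rplus_le_compat_r, hnorm_triangle|].
    rewrite hnorm_scal_ge0, hnorm_scal by lra; fold nx.
    pose proof (Rabs_pos (snd (s n) - snd l)); nra.
Qed.

Lemma Zs_sq_dist (z c : Zs) : hinner Zs (hsub z c) (hsub z c) =
  ip (hsub (fst (fst z)) (fst (fst c))) (hsub (fst (fst z)) (fst (fst c))) +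
  ip (hsub (snd (fst z)) (snd (fst c))) (hsub (snd (fst z)) (snd (fst c))) +
  (snd z - snd c) * (snd z - snd c).
Proof. reflexivity. Qed.

Section Minimizer.
Hypothesis T_coderiv : forall u v, T u v -> forall w z, reg_coderiv T u v w z -> 0 <= ip z w.
Variable sg : R.
Hypothesis sg_pos : 0 < sg.
Variables ub vb ca cb : X.
Variables tb ct : R.
Hypothesis zb_dom : zdom ((ub, vb), tb).
Hypothesis zb_min : forall z, zdom z ->
  zobj ((ub, vb), tb)
  + sg * hinner Zs (hsub (((ub, vb), tb) : Zs) ((ca, cb), ct))
                   (hsub (((ub, vb), tb) : Zs) ((ca, cb), ct))
  <= zobj z + sg * hinner Zs (hsub z ((ca, cb), ct)) (hsub z ((ca, cb), ct)).

Let a := hsub ub ca.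
Let b := hsub vb cb.
Let wb := defect ub vb tb.
Let kk := 4 / gap.

Lemma kk_pos : kk > 0.
Proof. unfold kk; apply Rdiv_lt_0_compat; [lra|apply gap_pos]. Qed.

Lemma minimizer_uv u v : T u v ->
  objective ub vb tb + sg * (ip a a + ip b b)
  <= objective u v tb + sg * (ip (hsub u ca) (hsub u ca) + ip (hsub v cb) (hsub v cb)).
Proof.
  intro HT; destruct zb_dom as [_ Ht].
  pose proof (zb_min ((u, v), tb) (conj HT Ht)) as M.
  rewrite !Zs_sq_dist in M; simpl in M; unfold zobj in M; simpl in M; fold a b in M.
  lra.
Qed.

Lemma minimizer_t t : 0 <= t <= 1 ->
  objective ub vb tb + sg * ((tb - ct) * (tb - ct))
  <= objective ub vb t + sg * ((t - ct) * (t - ct)).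
Proof.
  intro Ht; pose proof (zb_min ((ub, vb), t) (conj (proj1 zb_dom) Ht)) as M.
  rewrite !Zs_sq_dist in M; simpl in M; unfold zobj in M; simpl in M; fold a b in M; lra.
Qed.

Definition zstar := hsub (hsub edir (hscal X (2 * kk) wb)) (hscal X (2 * sg) a).
Definition wstar := hadd X (hscal X lam (hadd X edir (hscal X (2 * kk) wb))) (hscal X (2 * sg) b).

(* (zstar, - wstar) is minus the gradient of the objective in (u, v). *)
Lemma minimizer_coderiv : 0 <= ip zstar wstar.
Proof.
  apply (T_coderiv ub vb (proj1 zb_dom)); pose proof (lam_pos r r_pos); pose proof kk_pos.
  apply (regular_normal_of_quadratic X (gph T) (ub, vb) (zstar, hopp X wstar)
    (2 * kk * (1 + lam * lam) + sg)); [nra|].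
  intros [u v] HT; unfold gph in HT; simpl in HT.
  pose proof (minimizer_uv u v HT) as M; unfold objective in M; fold kk in M.
  set (Du := hsub u ub) in *; set (Dv := hsub v vb) in *.
  replace (yco u v) with (hadd X (yco ub vb) (hsub Du (hscal X lam Dv))) in M
    by (unfold Du, Dv, yco; hvec).
  replace (defect u v tb) with (hadd X wb (hadd X Du (hscal X lam Dv))) in M
    by (unfold wb, Du, Dv, defect, xco; hvec).
  replace (hsub u ca) with (hadd X a Du) in M by (unfold a, Du; hvec).
  replace (hsub v cb) with (hadd X b Dv) in M by (unfold b, Dv; hvec).
  rewrite (hinner_add_sq X wb), (hinner_add_sq X a), (hinner_add_sq X b), hinner_addl in M.
  assert (Q : ip (hadd X Du (hscal X lam Dv)) (hadd X Du (hscal X lam Dv))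
              <= 2 * ip Du Du + 2 * lam * lam * ip Dv Dv).
  { pose proof (hinner_pos X (hsub Du (hscal X lam Dv))) as K.
    rewrite hinner_sub_sq in K; rewrite hinner_add_sq.
    rewrite !hinner_scall, !hinner_scalr in *; lra. }
  unfold pinner, psub; simpl; fold Du Dv; unfold zstar, wstar; rewrite hinner_oppl.
  hinner_simpl; rewrite (hinner_addr X wb), hinner_scalr, hinner_subl, hinner_scall in M.
  rewrite (hinner_sym X edir Du), (hinner_sym X edir Dv); fold wb in M.
  pose proof (hinner_pos X Du); pose proof (hinner_pos X Dv).
  assert (kk * ip (hadd X Du (hscal X lam Dv)) (hadd X Du (hscal X lam Dv))
          <= kk * (2 * ip Du Du + 2 * lam * lam * ip Dv Dv)) by (apply Rmult_le_compat_l; lra).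
  assert (0 <= kk * ip Dv Dv) by (apply Rmult_le_pos; lra).
  assert (0 <= kk * (lam * lam) * ip Du Du) by (apply Rmult_le_pos; nra).
  nra.
Qed.

Hypothesis zb_close :
  hinner Zs (hsub (((ub, vb), tb) : Zs) ((ca, cb), ct))
            (hsub (((ub, vb), tb) : Zs) ((ca, cb), ct)) <= 1.
Hypothesis zb_opt : forall z, zdom z -> zobj ((ub, vb), tb) <= zobj z + gap / 4.

Lemma minimizer_t_pos : tb > 0.
Proof.
  destruct zb_dom as [HT [Ht0 _]]; destruct (Rle_lt_or_eq_dec 0 tb Ht0) as [|E]; [assumption|].
  exfalso; subst tb.
  pose proof (objective_lower0 ub vb HT).
  assert (Hend : zdom ((u2, v2), 1)) by (split; simpl; [exact T2|lra]).
  pose proof (zb_opt _ Hend) as B; unfold zobj in B; simpl in B; rewrite objective_end in B.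
  pose proof gap_pos; lra.
Qed.

Lemma minimizer_t_derivative : 0 <= - slope + 2 * kk * ip wb dx - 2 * sg * (tb - ct).
Proof.
  pose proof kk_pos; pose proof (hinner_pos X dx).
  apply (small_param_ge0 _ (kk * ip dx dx + sg) tb minimizer_t_pos); [nra|].
  intros h Hh; destruct zb_dom as [_ Ht]; simpl in Ht.
  pose proof (minimizer_t (tb - h) ltac:(lra)) as M; unfold objective in M; fold kk in M.
  replace (defect ub vb (tb - h)) with (hadd X wb (hscal X h dx)) in M
    by (unfold wb, defect; hvec).
  fold wb in M; rewrite hinner_add_sq, hinner_scalr, hinner_scall, hinner_scalr in M.
  apply Rmult_le_reg_l with h; [lra|]; nra.
Qed.

Lemma minimizer_components : hnorm a <= 1 /\ hnorm b <= 1 /\ Rabs (tb - ct) <= 1.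
Proof.
  rewrite Zs_sq_dist in zb_close; simpl in zb_close; fold a b in zb_close.
  pose proof (hinner_pos X a); pose proof (hinner_pos X b); pose proof (Rle_0_sqr (tb - ct)).
  unfold Rsqr in *.
  repeat split; [apply hinner_sq_le_unit; lra|apply hinner_sq_le_unit; lra|].
  rewrite <- sqrt_Rsqr_abs; apply sqrt_le_square; [lra|unfold Rsqr; lra].
Qed.

Lemma minimizer_slope_bound : slope <= 2 * kk * hnorm wb * nx + 2 * sg.
Proof.
  pose proof minimizer_t_derivative; destruct minimizer_components as [_ [_ Ht]].
  pose proof (hinner_le_norm X wb dx); pose proof kk_pos.
  pose proof (Rle_abs (- (tb - ct))) as Hn; rewrite Rabs_Ropp in Hn.
  fold nx in *; nra.
Qed.

Lemma minimizer_gradient_bound :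
  0 <= lam * (1 - (2 * kk * hnorm wb) * (2 * kk * hnorm wb))
       + 2 * sg * (1 + 2 * kk * hnorm wb) * (1 + lam) + 4 * sg * sg.
Proof.
  destruct minimizer_components as [Ha [Hb _]]; pose proof minimizer_coderiv.
  pose proof (lam_pos r r_pos); pose proof kk_pos.
  eapply Rle_trans; [eassumption|].
  apply gradient_pair_bound; try assumption; try lra; apply edir_unit.
Qed.

End Minimizer.

Lemma no_violation
  (T_coderiv : forall u v, T u v -> forall w z, reg_coderiv T u v w z -> 0 <= ip z w) :
  False.
Proof.
  pose proof (lam_pos r r_pos) as Hl; pose proof nx_ge0; pose proof gap_pos.
  set (c := 4 * lam + (12 + 4 * lam) * nx).
  assert (Hc : c > 0) by (unfold c; nra).
  set (sg := Rmin 1 (gap * lam / c)).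
  assert (sg1 : sg <= 1) by apply Rmin_l.
  assert (sg0 : 0 < sg) by (apply Rmin_pos; [lra|apply Rdiv_lt_0_compat; nra]).
  assert (sg2 : sg * c <= gap * lam).
  { assert (sg <= gap * lam / c) by apply Rmin_r.
    apply Rmult_le_compat_r with (r := c) in H1; [|lra].
    replace (gap * lam / c * c) with (gap * lam) in H1 by (field; lra); exact H1. }
  destruct (smooth_variational Zs zdom zobj zdom_closed) with (sig := sg) (eta := gap / 4)
    as [[[ub vb] tb] [[[ca cb] ct] [Hzb [Hmin [Hclose Hopt]]]]].
  - exists ((u1, v1), 0); split; simpl; [exact T1|lra].
  - exists (base - 2 * nx - gap / 4); intros z [HT Ht]; apply Rge_le, objective_lower; assumption.
  - intros s l _ _; apply zobj_cont.
  - exact sg0.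
  - lra.
  - apply (violation_numerics lam nx gap sg (2 * (4 / gap) * hnorm (defect ub vb tb)));
      try assumption.
    + apply Rmult_le_pos; [|apply hnorm_ge0].
      apply Rmult_le_pos; [lra|apply Rlt_le, Rdiv_lt_0_compat; lra].
    + apply (minimizer_gradient_bound T_coderiv sg sg0 ub vb ca cb tb ct); assumption.
    + replace (nx + gap) with slope by (unfold slope, gap; field).
      apply (minimizer_slope_bound sg sg0 ub vb ca cb tb ct); assumption.
Qed.

End Violation.

Lemma monotone_sum_controls (X : HilbertSpace) (T : X -> X -> Prop) a b a' b' :
  monotone T -> T a b -> T a' b' ->
  hinner X (hsub a a') (hsub a a') + hinner X (hsub b b') (hsub b b')
  <= hinner X (hsub (hadd X a b) (hadd X a' b')) (hsub (hadd X a b) (hadd X a' b')).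
Proof.
  intros Hm H1 H2; pose proof (Hm _ _ _ _ H1 H2) as M.
  replace (hsub (hadd X a b) (hadd X a' b')) with (hadd X (hsub a a') (hsub b b')) by hvec.
  rewrite hinner_add_sq; rewrite (hinner_sym X (hsub b b')) in M; lra.
Qed.

Lemma monotone_surjective_maximal (X : HilbertSpace) (T : X -> X -> Prop) :
  monotone T -> (forall w, exists a b, T a b /\ hadd X a b = w) -> maximal_monotone T.
Proof.
  intros Hm Hs; split; [exact Hm|]; intros S HS HTS u v; split; [|apply HTS].
  intro Suv; destruct (Hs (hadd X u v)) as [a [b [Hab E]]].
  pose proof (monotone_sum_controls X S u v a b HS Suv (HTS _ _ Hab)) as K.
  rewrite E in K; replace (hsub (hadd X u v) (hadd X u v)) with (hzero X) in K by hvec.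
  rewrite hinner_0l in K.
  pose proof (hinner_pos X (hsub u a)); pose proof (hinner_pos X (hsub v b)).
  replace u with a by (symmetry; apply hsub_eq0, hinner_def; lra).
  replace v with b by (symmetry; apply hsub_eq0, hinner_def; lra).
  exact Hab.
Qed.

Section Surjectivity.
Variable X : HilbertSpace.
Variable T : X -> X -> Prop.
Hypothesis T_closed : closed_pset (gph T).
Hypothesis T_proper : proper T.
Hypothesis T_mono : monotone T.
Hypothesis T_coderiv : forall u v, T u v -> forall w z, reg_coderiv T u v w z -> 0 <= hinner X z w.

Local Notation ip := (hinner X).

Section ApproxMinimizer.
Variable x0 : X.
Variable sg : R.
Hypothesis sg_pos : 0 < sg.
Variables ub vb ca cb : X.
Hypothesis Tb : T ub vb.
Hypothesis b_min : forall u v, T u v ->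
  ip (hsub (hadd X ub vb) x0) (hsub (hadd X ub vb) x0)
  + sg * (ip (hsub ub ca) (hsub ub ca) + ip (hsub vb cb) (hsub vb cb))
  <= ip (hsub (hadd X u v) x0) (hsub (hadd X u v) x0)
     + sg * (ip (hsub u ca) (hsub u ca) + ip (hsub v cb) (hsub v cb)).

Let a := hsub ub ca.
Let b := hsub vb cb.
Let e := hsub (hadd X ub vb) x0.

Definition residual_z := hscal X (-2) (hadd X e (hscal X sg a)).
Definition residual_w := hscal X 2 (hadd X e (hscal X sg b)).

Lemma residual_coderiv : 0 <= ip residual_z residual_w.
Proof.
  apply (T_coderiv ub vb Tb).
  apply (regular_normal_of_quadratic X (gph T) (ub, vb) _ (2 + sg)); [lra|].
  intros [u v] HT; unfold gph in HT; simpl in HT.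
  pose proof (b_min u v HT) as M; fold a b e in M.
  set (Du := hsub u ub); set (Dv := hsub v vb).
  replace (hsub (hadd X u v) x0) with (hadd X e (hadd X Du Dv)) in M by (unfold e, Du, Dv; hvec).
  replace (hsub u ca) with (hadd X a Du) in M by (unfold a, Du; hvec).
  replace (hsub v cb) with (hadd X b Dv) in M by (unfold b, Dv; hvec).
  rewrite (hinner_add_sq X e), (hinner_add_sq X a), (hinner_add_sq X b), hinner_addr in M.
  assert (Q : ip (hadd X Du Dv) (hadd X Du Dv) <= 2 * ip Du Du + 2 * ip Dv Dv).
  { pose proof (hinner_pos X (hsub Du Dv)).
    rewrite hinner_sub_sq in *; rewrite hinner_add_sq; lra. }
  unfold pinner, psub; simpl; fold Du Dv; unfold residual_z, residual_w.
  rewrite hinner_oppl; hinner_simpl.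
  pose proof (hinner_pos X Du); pose proof (hinner_pos X Dv).
  assert (0 <= sg * ip Du Du) by (apply Rmult_le_pos; lra).
  assert (0 <= sg * ip Dv Dv) by (apply Rmult_le_pos; lra).
  lra.
Qed.

Lemma residual_small : hnorm a <= 1 -> hnorm b <= 1 -> hnorm e <= 3 * sg.
Proof.
  intros Ha Hb; pose proof residual_coderiv as HC.
  unfold residual_z, residual_w in HC.
  rewrite hinner_scall, hinner_scalr, !hinner_addl, !hinner_addr, !hinner_scall,
    !hinner_scalr in HC.
  rewrite <- (hnorm_sq X e) in HC.
  pose proof (hinner_ge_norm X e b); pose proof (hinner_ge_norm X a e);
    pose proof (hinner_ge_norm X a b).
  pose proof (hnorm_ge0 X e); pose proof (hnorm_ge0 X a); pose proof (hnorm_ge0 X b).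
  assert (- ip e b <= hnorm e) by nra; assert (- ip a e <= hnorm e) by nra.
  assert (- ip a b <= 1) by nra.
  assert (hnorm e * hnorm e <= 2 * sg * hnorm e + sg * sg).
  { assert (sg * - ip e b <= sg * hnorm e) by (apply Rmult_le_compat_l; lra).
    assert (sg * - ip a e <= sg * hnorm e) by (apply Rmult_le_compat_l; lra).
    assert (sg * sg * - ip a b <= sg * sg * 1) by (apply Rmult_le_compat_l; nra).
    lra. }
  nra.
Qed.

End ApproxMinimizer.

Lemma approx_preimage x0 sg : 0 < sg <= 1 ->
  exists a b, T a b /\ hnorm (hsub (hadd X a b) x0) <= 3 * sg.
Proof.
  intros Hsg.
  set (f := fun p : prodH X X => ip (hsub (hadd X (fst p) (snd p)) x0)
                                    (hsub (hadd X (fst p) (snd p)) x0)).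
  destruct (smooth_variational (prodH X X) (gph T) f (seqclosed_gph X T T_closed))
    with (sig := sg) (eta := 1) as [[ub vb] [[ca cb] [Hb [Hmin [Hclose _]]]]]; try lra.
  - destruct T_proper as [a [b Hab]]; exists (a, b); exact Hab.
  - exists 0; intros z _; apply hinner_pos.
  - intros s l _ _ Hc; apply conv_hinner_sq, conv_sub; [|apply conv_const].
    apply (conv_fst_add_snd X s l Hc).
  - exists ub, vb; split; [exact Hb|].
    simpl in Hclose; pose proof (hinner_pos X (hadd X ub (hopp X ca)));
      pose proof (hinner_pos X (hadd X vb (hopp X cb))).
    apply (residual_small x0 sg (proj1 Hsg) ub vb ca cb Hb);
      [intros u v HT; exact (Hmin (u, v) HT)|apply hinner_sq_le_unit; unfold hsub; lra..].
Qed.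

Section PreimageSequence.
Variable w : X.
Variable p : nat -> X * X.
Hypothesis p_graph : forall k, T (fst (p k)) (snd (p k)).
Hypothesis p_close : forall k, hnorm (hsub (hadd X (fst (p k)) (snd (p k))) w) <= 3 * (/2) ^ k.

Lemma preimage_step k :
  ip (hsub (fst (p (S k))) (fst (p k))) (hsub (fst (p (S k))) (fst (p k)))
  + ip (hsub (snd (p (S k))) (snd (p k))) (hsub (snd (p (S k))) (snd (p k)))
  <= 5 * (/2) ^ k * (5 * (/2) ^ k).
Proof.
  eapply Rle_trans; [apply (monotone_sum_controls X T); auto|].
  rewrite <- hnorm_sq; apply Rsqr_incr_1; [|apply hnorm_ge0|pose proof (half_pow_pos k); lra].
  replace (hsub (hadd X (fst (p (S k))) (snd (p (S k)))) (hadd X (fst (p k)) (snd (p k))))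
    with (hsub (hsub (hadd X (fst (p (S k))) (snd (p (S k)))) w)
               (hsub (hadd X (fst (p k)) (snd (p k))) w)) by hvec.
  eapply Rle_trans; [apply hnorm_sub_le|].
  pose proof (p_close (S k)); pose proof (p_close k); simpl in *; pose proof (half_pow_pos k); lra.
Qed.

Lemma preimage_limit : exists a b, T a b /\ hadd X a b = w.
Proof.
  destruct (geometric_conv X (fun k => fst (p k)) 5) as [la [Hla _]]; [lra| |].
  { intro k; apply hnorm_le; [pose proof (half_pow_pos k); lra|].
    pose proof (hinner_pos X (hsub (snd (p (S k))) (snd (p k)))).
    pose proof (preimage_step k); lra. }
  destruct (geometric_conv X (fun k => snd (p k)) 5) as [lb [Hlb _]]; [lra| |].
  { intro k; apply hnorm_le; [pose proof (half_pow_pos k); lra|].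
    pose proof (hinner_pos X (hsub (fst (p (S k))) (fst (p k)))).
    pose proof (preimage_step k); lra. }
  assert (Hp : @conv (prodH X X) p (la, lb)) by (apply conv_pair; assumption).
  exists la, lb; split.
  - apply (seqclosed_gph X T T_closed p (la, lb) p_graph Hp).
  - apply (conv_unique X (fun k => hadd X (fst (p k)) (snd (p k)))).
    + apply (conv_fst_add_snd X p (la, lb) Hp).
    + intros eps He; destruct (half_pow_lt (eps / 3)) as [N HN]; [lra|].
      exists N; intros n Hn; specialize (HN n Hn); pose proof (p_close n); lra.
Qed.

End PreimageSequence.

Theorem surjective_sum : forall w, exists a b, T a b /\ hadd X a b = w.
Proof.
  intro w.
  assert (Happrox : forall k : nat, exists p : X * X,
    T (fst p) (snd p) /\ hnorm (hsub (hadd X (fst p) (snd p)) w) <= 3 * (/2) ^ k).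
  { intro k; destruct (approx_preimage w ((/2) ^ k)) as [a [b [Hab Hn]]].
    - split; [apply half_pow_pos|apply pow_le1; lra].
    - exists (a, b); auto. }
  destruct (choice _ Happrox) as [p Hp].
  apply (preimage_limit w p); apply Hp.
Qed.

End Surjectivity.

Theorem theorem3p2 (X : HilbertSpace) (T : X -> X -> Prop) :
  proper T -> closed_pset (gph T) ->
  (maximal_monotone T <->
   (hypomonotone T /\
    forall u v, T u v -> forall w z, reg_coderiv T u v w z -> 0 <= hinner X z w)).
Proof.
  intros Hp Hcl; split.
  - intro Hmax; split.
    + apply monotone_hypomonotone, Hmax.
    + intros u v Huv w z; apply maximal_monotone_coderiv_ge0; assumption.
  - intros [[r [Hr Hhypo]] Hcod].
    assert (Hmono : monotone T).
    { intros u1 v1 u2 v2 H1 H2; apply Rnot_lt_le; intro Hneg.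
      exact (no_violation X T Hcl r Hr Hhypo u1 v1 u2 v2 H1 H2 Hneg Hcod). }
    apply monotone_surjective_maximal; [exact Hmono|].
    apply surjective_sum; assumption.
Qed.
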